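(* For $d\in\{3,4\}$, no graph of the form $K_d\star G_6$ (with $G_6$ any graph on $6$ vertices) is $d$-ball packable, except $K_3\star C_6$ (for $d=3$). For $d\ge 5$, no graph of the form $K_d\star G_5$ (with $G_5$ any graph on $5$ vertices) is $d$-ball packable.
   Context: $K_n$ is the complete graph on $n$ vertices, $C_n$ the cycle on $n$ vertices, $G_n$ denotes an arbitrary graph on $n$ vertices. $G\star H$ is the join (disjoint union plus all edges between $G$ and $H$). A $d$-ball in $\hat{\mathbb R}^d$ is a closed ball, closed exterior of an open ball with $\infty$, or a closed half-space with $\infty$; a $d$-ball packing is a collection of $d$-balls with disjoint interiors; its tangency graph joins balls meeting in exactly one point; a graph is $d$-ball packable if isomorphic to the tangency graph of some $d$-ball packing. *)

From Stdlib Require Import Reals Arith.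
Open Scope R_scope.

(* Vectors: functions nat -> R; a point of R^d is a vector vanishing at all
   coordinates >= d (so equality of points is equality of functions). *)
Definition vec := nat -> R.
Definition inRd (d : nat) (x : vec) : Prop := forall i, (d <= i)%nat -> x i = 0.

Fixpoint dot (d : nat) (x y : vec) : R :=
  match d with
  | O => 0
  | S k => dot k x y + x k * y k
  end.

Definition dist2 (d : nat) (x y : vec) : R :=
  dot d (fun i => x i - y i) (fun i => x i - y i).

(* Points of the one-point compactification \hat R^d: None is infinity. *)
Definition ept := option vec.

Inductive dball : Type :=
  | CBall (c : vec) (r : R)
  | CExt  (c : vec) (r : R)   (* closed exterior { |x-c| >= r } together with infinity *)
  | HSpace (a : vec) (b : R). (* closed half-space { a.x <= b } together with infinity *)

Definition valid_ball (d : nat) (B : dball) : Prop :=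
  match B with
  | CBall c r => inRd d c /\ 0 < r
  | CExt c r => inRd d c /\ 0 < r
  | HSpace a b => inRd d a /\ exists i, (i < d)%nat /\ a i <> 0
  end.

Definition mem (d : nat) (B : dball) (p : ept) : Prop :=
  match p with
  | None => match B with CBall _ _ => False | _ => True end
  | Some x => inRd d x /\
      match B with
      | CBall c r => dist2 d x c <= r ^ 2
      | CExt c r => r ^ 2 <= dist2 d x c
      | HSpace a b => dot d a x <= b
      end
  end.

(* Topological interior in \hat R^d (neighbourhoods of infinity are
   complements of bounded sets, plus infinity). *)
Definition interior (d : nat) (S : ept -> Prop) (p : ept) : Prop :=
  S p /\
  match p with
  | Some x => exists eps, 0 < eps /\
      forall y, inRd d y -> dist2 d x y < eps ^ 2 -> S (Some y)
  | None => exists M, forall y, inRd d y -> M ^ 2 < dot d y y -> S (Some y)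
  end.

Definition ball_packing (d n : nat) (B : nat -> dball) : Prop :=
  (forall i, (i < n)%nat -> valid_ball d (B i)) /\
  (forall i j, (i < n)%nat -> (j < n)%nat -> i <> j ->
     ~ (exists p, interior d (mem d (B i)) p /\ interior d (mem d (B j)) p)).

Definition tangent (d : nat) (B1 B2 : dball) : Prop :=
  exists p, mem d B1 p /\ mem d B2 p /\
    forall q, mem d B1 q -> mem d B2 q -> q = p.

Definition simple_graph (n : nat) (G : nat -> nat -> Prop) : Prop :=
  forall i j, (i < n)%nat -> (j < n)%nat -> G i j -> G j i /\ i <> j.

Definition ball_packable (d n : nat) (G : nat -> nat -> Prop) : Prop :=
  exists B : nat -> dball, ball_packing d n B /\
    forall i j, (i < n)%nat -> (j < n)%nat -> i <> j ->
      (G i j <-> tangent d (B i) (B j)).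

(* K_k * G : vertices 0..k-1 form K_k, vertices k..k+m-1 carry G (shifted). *)
Definition join_K (k : nat) (G : nat -> nat -> Prop) : nat -> nat -> Prop :=
  fun i j => (i < k)%nat \/ (j < k)%nat \/ G (i - k)%nat (j - k)%nat.

Definition C6 : nat -> nat -> Prop :=
  fun i j => j = ((i + 1) mod 6)%nat \/ i = ((j + 1) mod 6)%nat.

Definition graph_iso (m : nat) (G H : nat -> nat -> Prop) : Prop :=
  exists f : nat -> nat,
    (forall i, (i < m)%nat -> (f i < m)%nat) /\
    (forall i j, (i < m)%nat -> (j < m)%nat -> f i = f j -> i = j) /\
    (forall i j, (i < m)%nat -> (j < m)%nat -> (G i j <-> H (f i) (f j))).

From Stdlib Require Import Reals Arith Lra Lia Psatz FunctionalExtensionality Classical.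
(* Imported after Reals so that [interior] refers to Defs, not to Rtopology. *)
From Pilot Require Import Defs.
Open Scope R_scope.

(* Every d-ball B gets a vector [inv_coords d B] in R^(d+2) with unit norm for
   the Lorentz form [lorentz d] of signature (d+1,1).  For two balls of a
   packing the form is <= -1, with equality exactly at tangency (the only
   exception, two complementary balls, is excluded once a third ball exists).
   In a packing of K_d * G_m the d clique vectors have pairwise product -1;
   projecting the other m vectors onto the orthogonal complement of the clique
   (a Euclidean plane, because the clique sum is timelike) yields m unit vectors
   of the plane whose pairwise inner products are <= 1/(d-1), with equality
   exactly on the edges of G_m ([packing_circle_code]).
   A Delsarte-type bound on such circle codes (one polynomial, [lp_bound])
   excludes m = 5 for d >= 5 and m = 6 for d = 4; for d = 3 and m = 6 it is
   tight, which forces the six vectors onto a regular hexagon, so G_6 = C_6.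
   Conversely K_3 * C_6 is realised by two parallel half-spaces, a unit ball
   between them and six unit balls around it. *)

Fixpoint sumR (n : nat) (f : nat -> R) : R :=
  match n with O => 0 | S k => sumR k f + f k end.

Lemma sumR_ext n f g : (forall i, (i < n)%nat -> f i = g i) -> sumR n f = sumR n g.
Proof. induction n; simpl; intros H; auto. rewrite IHn by (intros; apply H; lia). rewrite H by lia. auto. Qed.

Lemma sumR_plus n f g : sumR n (fun i => f i + g i) = sumR n f + sumR n g.
Proof. induction n; simpl; [lra|]. rewrite IHn; lra. Qed.

Lemma sumR_scal n a f : sumR n (fun i => a * f i) = a * sumR n f.
Proof. induction n; simpl; [lra|]. rewrite IHn; lra. Qed.

Lemma sumR_zero n f : (forall i, (i < n)%nat -> f i = 0) -> sumR n f = 0.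
Proof. induction n; simpl; intros H; auto. rewrite IHn by (intros; apply H; lia). rewrite H by lia. lra. Qed.

Lemma sumR_const n a : sumR n (fun _ => a) = INR n * a.
Proof. induction n; simpl sumR; [simpl; ring|]. rewrite IHn, S_INR. ring. Qed.

Lemma sumR_le n f g : (forall i, (i < n)%nat -> f i <= g i) -> sumR n f <= sumR n g.
Proof. induction n; simpl; intros H; [lra|]. specialize (IHn (fun i Hi => H i ltac:(lia))). specialize (H n ltac:(lia)). lra. Qed.

Lemma sumR_nonneg n f : (forall i, (i < n)%nat -> 0 <= f i) -> 0 <= sumR n f.
Proof. intros H. replace 0 with (sumR n (fun _ => 0)) by (apply sumR_zero; auto). apply sumR_le; auto. Qed.

Lemma sumR_swap n k (G : nat -> nat -> R) : sumR n (fun i => sumR k (fun t => G i t)) = sumR k (fun t => sumR n (fun i => G i t)).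
Proof.
  induction n; simpl.
  - symmetry. apply sumR_zero; auto.
  - rewrite IHn. rewrite <- sumR_plus. auto.
Qed.

Lemma sumR_sign d p a : (p < d)%nat -> sumR d (fun t => a t * (if (t =? p)%nat then 1 else -1)) = 2 * a p - sumR d a.
Proof.
  induction d; intros Hp; [lia|]. simpl.
  destruct (Nat.eq_dec p d) as [->|Hne].
  - rewrite Nat.eqb_refl. rewrite (sumR_ext d _ (fun t => -1 * a t)).
    rewrite sumR_scal. ring. intros t Ht. replace (t =? d)%nat with false by (symmetry; apply Nat.eqb_neq; lia). ring.
  - rewrite IHd by lia. replace (d =? p)%nat with false by (symmetry; apply Nat.eqb_neq; lia). ring.
Qed.

Lemma sumR_le_one n g i : (i < n)%nat -> (forall j, (j < n)%nat -> j <> i -> g j <= 0) -> sumR n g <= g i.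
Proof.
  induction n; intros Hi H; [lia|]. simpl.
  destruct (Nat.eq_dec i n) as [->|Hne].
  - assert (sumR n g <= 0). { replace 0 with (sumR n (fun _ => 0)) by (apply sumR_zero; auto).
      apply sumR_le; intros; apply H; lia. } lra.
  - assert (g n <= 0) by (apply H; lia). assert (sumR n g <= g i) by (apply IHn; [lia| intros; apply H; lia]). lra.
Qed.

Lemma sumR_le_two n g i j : (i < n)%nat -> (j < n)%nat -> i <> j ->
  (forall k, (k < n)%nat -> k <> i -> k <> j -> g k <= 0) -> sumR n g <= g i + g j.
Proof.
  induction n; intros Hi Hj Hij H; [lia|]. simpl.
  destruct (Nat.eq_dec i n) as [->|Hne].
  - assert (sumR n g <= g j) by (apply sumR_le_one; [lia| intros; apply H; lia]). lra.
  - destruct (Nat.eq_dec j n) as [->|Hne2].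
    + assert (sumR n g <= g i) by (apply sumR_le_one; [lia| intros; apply H; lia]). lra.
    + assert (g n <= 0) by (apply H; lia). assert (sumR n g <= g i + g j) by (apply IHn; try lia; intros; apply H; lia). lra.
Qed.

Lemma dot_ext d u v u' v' : (forall i, (i < d)%nat -> u i = u' i) -> (forall i, (i < d)%nat -> v i = v' i) ->
  dot d u v = dot d u' v'.
Proof. induction d; simpl; intros H1 H2; auto. rewrite IHd by (intros; auto). rewrite H1, H2 by lia; auto. Qed.

Lemma dot_sym d u v : dot d u v = dot d v u.
Proof. induction d; simpl; auto. rewrite IHd; ring. Qed.

Lemma dot_lin d a b u w v : dot d (fun i => a * u i + b * w i) v = a * dot d u v + b * dot d w v.
Proof. induction d; simpl; [ring|]. rewrite IHd; ring. Qed.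

Lemma dot_lin_r d a b u w v : dot d v (fun i => a * u i + b * w i) = a * dot d v u + b * dot d v w.
Proof. rewrite dot_sym, dot_lin, !(dot_sym d v); auto. Qed.

Lemma dot_sub d u w v : dot d (fun i => u i - w i) v = dot d u v - dot d w v.
Proof. rewrite (dot_ext d _ v (fun i => 1 * u i + (-1) * w i) v) by (intros; ring). rewrite dot_lin; ring. Qed.

Lemma dot_sub_r d u w v : dot d v (fun i => u i - w i) = dot d v u - dot d v w.
Proof. rewrite dot_sym, dot_sub, !(dot_sym d v); auto. Qed.

Lemma dot_scal d a u v : dot d (fun i => a * u i) v = a * dot d u v.
Proof. induction d; simpl; [ring|]. rewrite IHd; ring. Qed.

Lemma dot_scal_r d a u v : dot d v (fun i => a * u i) = a * dot d v u.
Proof. rewrite dot_sym, dot_scal, dot_sym; auto. Qed.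

Lemma dot_add d u w v : dot d (fun i => u i + w i) v = dot d u v + dot d w v.
Proof. induction d; simpl; [ring|]. rewrite IHd; ring. Qed.

Lemma dot_add_r d u w v : dot d v (fun i => u i + w i) = dot d v u + dot d v w.
Proof. rewrite dot_sym, dot_add, !(dot_sym d v); auto. Qed.

Lemma dot_zero_l d z : dot d (fun _ => 0) z = 0.
Proof. induction d; simpl; [auto|rewrite IHd; ring]. Qed.

Lemma dot_pos d u : 0 <= dot d u u.
Proof. induction d; simpl; nra. Qed.

Lemma dot_zero d u : dot d u u = 0 -> forall i, (i < d)%nat -> u i = 0.
Proof.
  induction d; simpl; intros H i Hi; [lia|].
  pose proof (dot_pos d u). assert (u d * u d = 0) by nra. assert (dot d u u = 0) by nra.
  destruct (Nat.eq_dec i d) as [->|]; [nra|]. apply IHd; auto; lia.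
Qed.

Lemma dot_pos_nz d u i : (i < d)%nat -> u i <> 0 -> 0 < dot d u u.
Proof. intros Hi Hu. pose proof (dot_pos d u). destruct (Rle_lt_or_eq_dec _ _ H); auto.
  exfalso; apply Hu; apply (dot_zero d u); auto. Qed.

Lemma valid_hs_pos d a : (exists i, (i < d)%nat /\ a i <> 0) -> 0 < dot d a a.
Proof. intros [i [Hi Ha]]. apply (dot_pos_nz d a i); auto. Qed.

Lemma cauchy_schwarz d u v : dot d u v * dot d u v <= dot d u u * dot d v v.
Proof.
  set (A := dot d u u); set (B := dot d u v); set (C := dot d v v).
  (* the quadratic t |-> |u - t v|^2 is nonnegative *)
  assert (Hq : forall t, 0 <= A - 2 * t * B + t * t * C).
  { intros t. pose proof (dot_pos d (fun i => 1 * u i + (- t) * v i)) as P.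
    rewrite dot_lin, !dot_lin_r, (dot_sym d v u) in P. unfold A, B, C. lra. }
  assert (HC : 0 <= C) by apply dot_pos.
  destruct (Req_dec C 0) as [HC0|HC0].
  - destruct (Req_dec B 0) as [HB0|HB0]; [rewrite HB0, HC0; lra|].
    specialize (Hq ((A + 1) / (2 * B))).
    replace (A - 2 * ((A + 1) / (2 * B)) * B + (A + 1) / (2 * B) * ((A + 1) / (2 * B)) * C)
      with (-1) in Hq by (rewrite HC0; field; auto). lra.
  - specialize (Hq (B / C)).
    replace (A - 2 * (B / C) * B + B / C * (B / C) * C) with ((A * C - B * B) / C) in Hq by (field; auto).
    assert (E : A * C - B * B = (A * C - B * B) / C * C) by (field; auto). nra.
Qed.

Definition vnorm d u := sqrt (dot d u u).

Lemma vnorm_sq d u : vnorm d u * vnorm d u = dot d u u.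
Proof. unfold vnorm. apply sqrt_sqrt, dot_pos. Qed.
Lemma vnorm_pos d u : 0 <= vnorm d u.
Proof. apply sqrt_pos. Qed.

Lemma vnorm_pos_strict d a : 0 < dot d a a -> 0 < vnorm d a.
Proof. intros; unfold vnorm; apply sqrt_lt_R0; auto. Qed.

Lemma dot_le_vnorm d u v : dot d u v <= vnorm d u * vnorm d v.
Proof.
  pose proof (cauchy_schwarz d u v). rewrite <- (vnorm_sq d u), <- (vnorm_sq d v) in H.
  pose proof (vnorm_pos d u). pose proof (vnorm_pos d v).
  destruct (Rle_or_lt (dot d u v) (vnorm d u * vnorm d v)); auto.
  assert (0 <= vnorm d u * vnorm d v) by nra. nra.
Qed.

Lemma dist2_sym d x y : dist2 d x y = dist2 d y x.
Proof. unfold dist2. rewrite (dot_ext d (fun i => y i - x i) (fun i => y i - x i) (fun i => -1 * (x i - y i)) (fun i => -1 * (x i - y i))) by (intros; ring).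
  rewrite dot_scal, dot_scal_r. ring. Qed.

Lemma dist2_expand d x y : dist2 d x y = dot d x x - 2 * dot d x y + dot d y y.
Proof. unfold dist2. rewrite dot_sub, !dot_sub_r. rewrite (dot_sym d y x). ring. Qed.

Lemma dist2_self d x : dist2 d x x = 0.
Proof. unfold dist2. rewrite (dot_ext d _ _ (fun _ => 0) (fun _ => 0)) by (intros; ring). apply dot_zero_l. Qed.

Lemma dist2_pos d x y : 0 <= dist2 d x y.
Proof. apply dot_pos. Qed.

Lemma sqrt_le_sum a b c : 0 <= a -> 0 <= b -> 0 <= c -> c <= (sqrt a + sqrt b) ^ 2 -> sqrt c <= sqrt a + sqrt b.
Proof.
  intros Ha Hb Hc H. rewrite <- (sqrt_pow2 (sqrt a + sqrt b)).
  apply sqrt_le_1_alt; auto. pose proof (sqrt_pos a); pose proof (sqrt_pos b); lra.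
Qed.

Lemma dist_triangle d x y z : sqrt (dist2 d x z) <= sqrt (dist2 d x y) + sqrt (dist2 d y z).
Proof.
  apply sqrt_le_sum; try apply dist2_pos.
  set (a := fun i => x i - y i). set (b := fun i => y i - z i).
  assert (E : dist2 d x z = dot d a a + 2 * dot d a b + dot d b b).
  { unfold dist2. rewrite (dot_ext d _ _ (fun i => a i + b i) (fun i => a i + b i)) by (intros; unfold a, b; ring).
    rewrite dot_add, !dot_add_r, (dot_sym d b a). ring. }
  rewrite E. fold (vnorm d a) (vnorm d b) in *. unfold dist2. fold a b. fold (vnorm d a) (vnorm d b).
  pose proof (dot_le_vnorm d a b). rewrite <- (vnorm_sq d a), <- (vnorm_sq d b). nra.
Qed.

Lemma dist2_zero_eq d x y : inRd d x -> inRd d y -> dist2 d x y = 0 -> x = y.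
Proof.
  intros Hx Hy H. apply functional_extensionality; intros i.
  destruct (lt_dec i d).
  - pose proof (dot_zero d _ H i l). simpl in H0. lra.
  - rewrite Hx, Hy by lia; auto.
Qed.

Definition vaxpy (x : vec) (t : R) (u : vec) : vec := fun i => x i + t * u i.

Lemma inRd_axpy d x t u : inRd d x -> inRd d u -> inRd d (vaxpy x t u).
Proof. unfold inRd, vaxpy; intros Hx Hu i Hi; rewrite Hx, Hu by auto; ring. Qed.

Lemma inRd_sub d x y : inRd d x -> inRd d y -> inRd d (fun i => x i - y i).
Proof. unfold inRd; intros Hx Hu i Hi; rewrite Hx, Hu by auto; ring. Qed.

Lemma dist2_axpy d x t u y : dist2 d (vaxpy x t u) y = dist2 d x y + 2 * t * dot d (fun i => x i - y i) u + t * t * dot d u u.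
Proof.
  unfold dist2, vaxpy.
  rewrite (dot_ext d _ _ (fun i => 1 * (x i - y i) + t * u i) (fun i => 1 * (x i - y i) + t * u i)) by (intros; ring).
  rewrite dot_lin, !dot_lin_r. rewrite (dot_sym d u). ring.
Qed.

Lemma dist2_axpy_self d x t u : dist2 d x (vaxpy x t u) = t * t * dot d u u.
Proof.
  unfold dist2, vaxpy.
  rewrite (dot_ext d _ _ (fun i => (-t) * u i) (fun i => (-t) * u i)) by (intros; ring).
  rewrite dot_scal, dot_scal_r. ring.
Qed.

Lemma dot_axpy d x t u v : dot d (vaxpy x t u) v = dot d x v + t * dot d u v.
Proof. unfold vaxpy. rewrite (dot_ext d _ v (fun i => 1 * x i + t * u i) v) by (intros; ring). rewrite dot_lin; ring. Qed.

Lemma dist2_to_axpy d x y t u : dist2 d x (vaxpy y t u) = dist2 d x y - 2 * t * dot d (fun i => x i - y i) u + t * t * dot d u u.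
Proof.
  rewrite dist2_sym, dist2_axpy, (dist2_sym d y x).
  rewrite (dot_ext d (fun i => y i - x i) u (fun i => -1 * (x i - y i)) u) by (intros; ring).
  rewrite dot_scal. ring.
Qed.
Lemma vaxpy_sub y x : vaxpy y 1 (fun i => x i - y i) = x.
Proof. apply functional_extensionality; intros; unfold vaxpy; ring. Qed.
Lemma vaxpy_sub' y x : vaxpy y (-1) (fun i => y i - x i) = x.
Proof. apply functional_extensionality; intros; unfold vaxpy; ring. Qed.
Lemma dot_sub_swap d x y : dot d (fun i => x i - y i) (fun i => y i - x i) = - dist2 d x y.
Proof. unfold dist2. rewrite (dot_ext d _ (fun i => y i - x i) (fun i => x i - y i) (fun i => -1 * (x i - y i))) by (intros; ring).
  rewrite dot_scal_r. ring. Qed.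

Lemma sqrt_lt_of a e : 0 <= a -> 0 <= e -> a < e * e -> sqrt a < e.
Proof. intros. pose proof (sqrt_sqrt a H). pose proof (sqrt_pos a). nra. Qed.
Lemma lt_of_sqrt a e : 0 <= a -> sqrt a < e -> a < e * e.
Proof. intros. pose proof (sqrt_sqrt a H). pose proof (sqrt_pos a). nra. Qed.
Lemma gt_of_sqrt a e : 0 <= a -> 0 <= e -> e < sqrt a -> e * e < a.
Proof. intros. pose proof (sqrt_sqrt a H). pose proof (sqrt_pos a). nra. Qed.
Lemma sqrt_gt_of a e : 0 <= a -> 0 <= e -> e * e < a -> e < sqrt a.
Proof. intros. pose proof (sqrt_sqrt a H). pose proof (sqrt_pos a). nra. Qed.

Lemma sqrt_le_of a e : 0 <= a -> 0 <= e -> a <= e * e -> sqrt a <= e.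
Proof. intros. pose proof (sqrt_sqrt a H). pose proof (sqrt_pos a). nra. Qed.
Lemma le_of_sqrt a e : 0 <= a -> sqrt a <= e -> a <= e * e.
Proof. intros. pose proof (sqrt_sqrt a H). pose proof (sqrt_pos a). nra. Qed.
Lemma sqrt_ge_of a e : 0 <= a -> 0 <= e -> e * e <= a -> e <= sqrt a.
Proof. intros. pose proof (sqrt_sqrt a H). pose proof (sqrt_pos a). nra. Qed.

Definition vzero : vec := fun _ => 0.

(* Interior points of the three kinds of balls: a strict inequality gives an
   interior point ([_intro]); conversely an interior point satisfies the
   strict inequality ([_elim]), since otherwise a small step outwards along
   the normal leaves the ball. *)
Lemma interior_CBall_intro d c r x : 0 < r -> inRd d x -> dist2 d x c < r ^ 2 ->
  interior d (mem d (CBall c r)) (Some x).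
Proof.
  intros Hr Hx H. split; [simpl; split; auto; lra|].
  pose proof (dist2_pos d x c).
  assert (Hs : sqrt (dist2 d x c) < r) by (apply sqrt_lt_of; nra).
  exists (r - sqrt (dist2 d x c)). split; [lra|]. intros y Hy Hxy. simpl. split; auto.
  pose proof (dist_triangle d y x c). rewrite (dist2_sym d y x) in H1.
  assert (sqrt (dist2 d x y) < r - sqrt (dist2 d x c)) by (apply sqrt_lt_of; try apply dist2_pos; nra).
  assert (dist2 d y c < r * r) by (apply lt_of_sqrt; [apply dist2_pos| lra]). nra.
Qed.

Lemma interior_CExt_intro d c r x : 0 < r -> inRd d x -> r ^ 2 < dist2 d x c ->
  interior d (mem d (CExt c r)) (Some x).
Proof.
  intros Hr Hx H. split; [simpl; split; auto; lra|].
  pose proof (dist2_pos d x c).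
  assert (Hs : r < sqrt (dist2 d x c)) by (apply sqrt_gt_of; nra).
  exists (sqrt (dist2 d x c) - r). split; [lra|]. intros y Hy Hxy. simpl. split; auto.
  pose proof (dist_triangle d x y c).
  assert (sqrt (dist2 d x y) < sqrt (dist2 d x c) - r) by (apply sqrt_lt_of; try apply dist2_pos; nra).
  assert (r * r < dist2 d y c) by (apply gt_of_sqrt; [apply dist2_pos| lra| lra]). nra.
Qed.

Lemma interior_HSpace_intro d a b x : 0 < dot d a a -> inRd d x -> dot d a x < b ->
  interior d (mem d (HSpace a b)) (Some x).
Proof.
  intros Ha Hx H. split; [simpl; split; auto; lra|].
  assert (Hn : 0 < vnorm d a). { unfold vnorm. apply sqrt_lt_R0; auto. }
  exists ((b - dot d a x) / vnorm d a). split. { apply Rdiv_lt_0_compat; lra. }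
  intros y Hy Hxy. simpl. split; auto.
  pose proof (dot_le_vnorm d a (fun i => y i - x i)). rewrite dot_sub_r in H0.
  assert (vnorm d (fun i => y i - x i) < (b - dot d a x) / vnorm d a).
  { change (sqrt (dot d (fun i => y i - x i) (fun i => y i - x i)) < (b - dot d a x) / vnorm d a). apply sqrt_lt_of. apply dot_pos. left; apply Rdiv_lt_0_compat; lra.
    rewrite dist2_sym in Hxy. unfold dist2 in Hxy. simpl in Hxy. rewrite Rmult_1_r in Hxy. exact Hxy. }
  assert (vnorm d a * vnorm d (fun i => y i - x i) < vnorm d a * ((b - dot d a x) / vnorm d a)) by (apply Rmult_lt_compat_l; auto).
  replace (vnorm d a * ((b - dot d a x) / vnorm d a)) with (b - dot d a x) in H2 by (field; lra). lra.
Qed.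

Lemma interior_CExt_infinity d c r : 0 < r -> interior d (mem d (CExt c r)) None.
Proof.
  intros Hr. split; [simpl; auto|]. exists (sqrt (dot d c c) + r). intros y Hy HM. simpl. split; auto.
  pose proof (dist_triangle d y c vzero).
  assert (E1 : dist2 d y vzero = dot d y y) by (unfold dist2, vzero; apply dot_ext; intros; ring).
  assert (E2 : dist2 d c vzero = dot d c c) by (unfold dist2, vzero; apply dot_ext; intros; ring).
  rewrite E1, E2 in H.
  pose proof (sqrt_pos (dot d c c)).
  assert (sqrt (dot d c c) + r < sqrt (dot d y y)) by (apply sqrt_gt_of; [apply dot_pos|lra|nra]).
  assert (r * r < dist2 d y c) by (apply gt_of_sqrt; [apply dist2_pos|lra|lra]). nra.
Qed.

Lemma interior_CBall_elim d c r x : 0 < r -> inRd d c -> interior d (mem d (CBall c r)) (Some x) -> dist2 d x c < r ^ 2.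
Proof.
  intros Hr Hc [[Hx Hm] [eps [He Hy]]].
  destruct (Rle_lt_or_eq_dec _ _ Hm) as [|Heq]; auto. exfalso.
  set (u := fun i => x i - c i). set (t := eps / (2 * r)).
  assert (Ht : 0 < t) by (unfold t; apply Rdiv_lt_0_compat; lra).
  assert (Hu : dot d u u = r ^ 2) by exact Heq.
  specialize (Hy (vaxpy x t u) (inRd_axpy d x t u Hx (inRd_sub d x c Hx Hc))).
  rewrite dist2_axpy_self, Hu in Hy.
  assert (t * t * r ^ 2 < eps ^ 2). { unfold t. replace (eps / (2 * r) * (eps / (2 * r)) * r ^ 2) with (eps^2 / 4) by (field; lra). nra. }
  specialize (Hy H). simpl in Hy. destruct Hy as [_ Hy].
  rewrite dist2_axpy in Hy. fold u in Hy. rewrite Hu in Hy. unfold dist2 in Hy. fold u in Hy. rewrite Hu in Hy. assert (0 < t * (r*r)) by (apply Rmult_lt_0_compat; nra). assert (0 <= t*t*(r*r)) by (apply Rmult_le_pos; nra). simpl in Hy. nra.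
Qed.

Lemma interior_HSpace_elim d a b x : 0 < dot d a a -> inRd d a -> interior d (mem d (HSpace a b)) (Some x) -> dot d a x < b.
Proof.
  intros Ha Hai [[Hx Hm] [eps [He Hy]]].
  destruct (Rle_lt_or_eq_dec _ _ Hm) as [|Heq]; auto. exfalso.
  assert (Hn : 0 < vnorm d a) by (unfold vnorm; apply sqrt_lt_R0; auto).
  pose proof (vnorm_sq d a).
  set (t := eps / (2 * vnorm d a)).
  assert (Ht : 0 < t) by (unfold t; apply Rdiv_lt_0_compat; lra).
  specialize (Hy (vaxpy x t a) (inRd_axpy d x t a Hx Hai)).
  rewrite dist2_axpy_self in Hy.
  assert (t * t * dot d a a < eps ^ 2). { rewrite <- H. unfold t. replace (eps / (2 * vnorm d a) * (eps / (2 * vnorm d a)) * (vnorm d a * vnorm d a)) with (eps^2 / 4) by (field; lra). nra. }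
  specialize (Hy H0). simpl in Hy. destruct Hy as [_ Hy].
  rewrite (dot_sym d a (vaxpy x t a)), dot_axpy, (dot_sym d x a) in Hy. nra.
Qed.

Lemma not_interior_HSpace_infinity d a b : 0 < dot d a a -> inRd d a -> ~ interior d (mem d (HSpace a b)) None.
Proof.
  intros Ha Hai [_ [M HM]].
  set (A := dot d a a) in *. set (K := Rabs M + Rabs b + 1). set (t := K * (1 + / A)).
  assert (inRd d (vaxpy vzero t a)) by (apply inRd_axpy; auto; intros i _; reflexivity).
  assert (E1 : dot d (vaxpy vzero t a) (vaxpy vzero t a) = t * t * A).
  { unfold vaxpy, vzero. rewrite (dot_ext d _ _ (fun i => t * a i) (fun i => t * a i)) by (intros; ring).
    rewrite dot_scal, dot_scal_r. unfold A; ring. }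
  assert (E2 : dot d a (vaxpy vzero t a) = t * A).
  { unfold vaxpy, vzero. rewrite (dot_ext d _ _ a (fun i => t * a i)) by (intros; ring).
    rewrite dot_scal_r. unfold A; ring. }
  assert (HK : 1 <= K) by (unfold K; pose proof (Rabs_pos M); pose proof (Rabs_pos b); lra).
  assert (E3 : t * A = K * (A + 1)) by (unfold t; field; lra).
  assert (E4 : t * t * A = K * K * (A + 2 + / A)) by (unfold t; field; lra).
  pose proof (Rinv_0_lt_compat A Ha).
  assert (M ^ 2 < dot d (vaxpy vzero t a) (vaxpy vzero t a)).
  { rewrite E1, E4. pose proof (Rabs_pos M). pose proof (RPow_abs M 2).
    replace (M ^ 2) with (Rabs M * Rabs M) by (rewrite <- Rabs_mult; rewrite Rabs_pos_eq; [ring| nra]).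
    assert (Rabs M < K) by (unfold K; pose proof (Rabs_pos b); lra). nra. }
  specialize (HM _ H H1). simpl in HM. destruct HM as [_ HM]. rewrite E2, E3 in HM.
  pose proof (Rle_abs b). unfold K in HM. pose proof (Rabs_pos M). pose proof (Rabs_pos b). assert (0 <= (Rabs M + Rabs b + 1) * A) by (apply Rmult_le_pos; lra). nra.
Qed.

Definition disjoint_int d B1 B2 := ~ (exists p, interior d (mem d B1) p /\ interior d (mem d B2) p).

Lemma disjoint_int_sym d B1 B2 : disjoint_int d B1 B2 -> disjoint_int d B2 B1.
Proof. unfold disjoint_int; intros H [p [H1 H2]]; apply H; eauto. Qed.

Lemma tangent_sym d B1 B2 : tangent d B1 B2 -> tangent d B2 B1.
Proof. intros [p [H1 [H2 H3]]]; exists p; repeat split; auto. Qed.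

Section BB.
Variables (d : nat) (c1 c2 : vec) (r1 r2 : R).
Hypotheses (Hc1 : inRd d c1) (Hc2 : inRd d c2) (Hr1 : 0 < r1) (Hr2 : 0 < r2).

Lemma BB_segment_point t : dist2 d (vaxpy c1 t (fun i => c2 i - c1 i)) c1 = t * t * dist2 d c1 c2
  /\ dist2 d (vaxpy c1 t (fun i => c2 i - c1 i)) c2 = (1 - t) * (1 - t) * dist2 d c1 c2.
Proof.
  split.
  - rewrite dist2_sym, dist2_axpy_self. rewrite (dist2_sym d c1 c2). reflexivity.
  - rewrite dist2_axpy, dot_sub_swap. change (dot d (fun i => c2 i - c1 i) (fun i => c2 i - c1 i)) with (dist2 d c2 c1).
    rewrite (dist2_sym d c2 c1). ring.
Qed.

Lemma BB_disjoint_bound : disjoint_int d (CBall c1 r1) (CBall c2 r2) -> (r1 + r2) ^ 2 <= dist2 d c1 c2.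
Proof.
  intros H. destruct (Rle_or_lt ((r1 + r2) ^ 2) (dist2 d c1 c2)) as [|Hlt]; auto. exfalso; apply H.
  set (t := r1 / (r1 + r2)). destruct (BB_segment_point t) as [E1 E2].
  pose proof (dist2_pos d c1 c2).
  exists (Some (vaxpy c1 t (fun i => c2 i - c1 i))). split.
  - apply interior_CBall_intro; auto. apply inRd_axpy; auto; apply inRd_sub; auto.
    rewrite E1. unfold t. replace (r1 / (r1 + r2) * (r1 / (r1 + r2)) * dist2 d c1 c2) with (r1^2 * (dist2 d c1 c2 / (r1+r2)^2)) by (field; lra).
    assert (dist2 d c1 c2 / (r1+r2)^2 < 1). { apply (Rmult_lt_reg_r ((r1+r2)^2)). nra. field_simplify; nra. }
    rewrite <- (Rmult_1_r (r1^2)) at 2. apply Rmult_lt_compat_l; [apply pow_lt; lra| exact H1].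
  - apply interior_CBall_intro; auto. apply inRd_axpy; auto; apply inRd_sub; auto.
    rewrite E2. unfold t. replace ((1 - r1 / (r1 + r2)) * (1 - r1 / (r1 + r2)) * dist2 d c1 c2) with (r2^2 * (dist2 d c1 c2 / (r1+r2)^2)) by (field; lra).
    assert (dist2 d c1 c2 / (r1+r2)^2 < 1). { apply (Rmult_lt_reg_r ((r1+r2)^2)). nra. field_simplify; nra. }
    rewrite <- (Rmult_1_r (r2^2)) at 2. apply Rmult_lt_compat_l; [apply pow_lt; lra| exact H1].
Qed.

Lemma BB_meet_bound x : dist2 d x c1 <= r1 ^ 2 -> dist2 d x c2 <= r2 ^ 2 -> dist2 d c1 c2 <= (r1 + r2) ^ 2.
Proof.
  intros H1 H2. pose proof (dist_triangle d c1 x c2). rewrite (dist2_sym d c1 x) in H.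
  assert (sqrt (dist2 d x c1) <= r1) by (apply sqrt_le_of; [apply dist2_pos|lra|nra]).
  assert (sqrt (dist2 d x c2) <= r2) by (apply sqrt_le_of; [apply dist2_pos|lra|nra]).
  assert (dist2 d c1 c2 <= (r1 + r2) * (r1 + r2)) by (apply le_of_sqrt; [apply dist2_pos|lra]). nra.
Qed.

Lemma BB_tangent : dist2 d c1 c2 = (r1 + r2) ^ 2 -> tangent d (CBall c1 r1) (CBall c2 r2).
Proof.
  intros HD. set (t := r1 / (r1 + r2)). destruct (BB_segment_point t) as [E1 E2].
  assert (Hp : inRd d (vaxpy c1 t (fun i => c2 i - c1 i))) by (apply inRd_axpy; auto; apply inRd_sub; auto).
  exists (Some (vaxpy c1 t (fun i => c2 i - c1 i))). simpl. split; [|split].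
  - split; auto. rewrite E1, HD. unfold t. right; field; lra.
  - split; auto. rewrite E2, HD. unfold t. right; field; lra.
  - intros [x|] Hm1 Hm2; [|destruct Hm1]. destruct Hm1 as [Hx Hx1]; destruct Hm2 as [_ Hx2]. f_equal.
    apply (dist2_zero_eq d); auto.
    apply Rle_antisym; [|apply dist2_pos].
    rewrite dist2_to_axpy.
    rewrite <- (vaxpy_sub c1 c2) in Hx2 at 1. rewrite dist2_to_axpy in Hx2.
    change (dot d (fun i => c2 i - c1 i) (fun i => c2 i - c1 i)) with (dist2 d c2 c1) in *.
    rewrite (dist2_sym d c2 c1), HD in *.
    set (T := dot d (fun i => x i - c1 i) (fun i => c2 i - c1 i)) in *.
    set (a := dist2 d x c1) in *.
    unfold t. pose proof (dist2_pos d x c1). fold a in H.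
    assert (H2T : 2 * T >= a + (r1+r2)^2 - r2^2) by nra.
    apply (Rmult_le_reg_r (r1 + r2)); [lra|]. rewrite Rmult_0_l.
    replace ((a - 2 * (r1 / (r1 + r2)) * T + r1 / (r1 + r2) * (r1 / (r1 + r2)) * (r1 + r2) ^ 2) * (r1 + r2))
      with ((r1+r2) * a - r1 * (2 * T) + r1^2 * (r1 + r2)) by (field; lra).
    nra.
Qed.

Lemma BB_disjoint_of : (r1 + r2) ^ 2 <= dist2 d c1 c2 -> disjoint_int d (CBall c1 r1) (CBall c2 r2).
Proof.
  intros H [[x|] [I1 I2]]; [|destruct I1 as [[] _]].
  apply interior_CBall_elim in I1; auto. apply interior_CBall_elim in I2; auto.
  pose proof (dist_triangle d c1 x c2). rewrite (dist2_sym d c1 x) in H0.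
  assert (sqrt (dist2 d x c1) < r1) by (apply sqrt_lt_of; [apply dist2_pos|lra|nra]).
  assert (sqrt (dist2 d x c2) < r2) by (apply sqrt_lt_of; [apply dist2_pos|lra|nra]).
  assert (dist2 d c1 c2 < (r1 + r2) * (r1 + r2)) by (apply lt_of_sqrt; [apply dist2_pos|lra]). nra.
Qed.
End BB.

(* A unit vector, used when two centres coincide. *)
Definition e0 : vec := fun i => if (i =? 0)%nat then 1 else 0.
Lemma e0_in d : inRd (S d) e0.
Proof. intros [|i] Hi; [lia|reflexivity]. Qed.
Lemma dot_e0 d : dot (S d) e0 e0 = 1.
Proof. induction d; simpl in *; [unfold e0; simpl; ring|]. rewrite IHd. unfold e0; simpl; ring. Qed.

Lemma dist2_zero_pt d x y : dist2 d x y = 0 -> forall i, (i < d)%nat -> x i = y i.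
Proof. intros H i Hi. pose proof (dot_zero d _ H i Hi). simpl in H0. lra. Qed.

Section BE.
Variables (d : nat) (c1 c2 : vec) (r1 r2 : R).
Hypotheses (Hd : (1 <= d)%nat) (Hc1 : inRd d c1) (Hc2 : inRd d c2) (Hr1 : 0 < r1) (Hr2 : 0 < r2).

Lemma BE_disjoint_bound : disjoint_int d (CBall c1 r1) (CExt c2 r2) -> sqrt (dist2 d c1 c2) + r1 <= r2.
Proof.
  intros H. set (D := sqrt (dist2 d c1 c2)).
  destruct (Rle_or_lt (D + r1) r2) as [|Hlt]; auto. exfalso; apply H.
  pose proof (dist2_pos d c1 c2). pose proof (sqrt_pos (dist2 d c1 c2)). fold D in H1.
  assert (HD2 : D * D = dist2 d c1 c2) by (apply sqrt_sqrt; auto).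
  destruct (Rle_lt_or_eq_dec _ _ H1) as [HDp|HD0].
  - set (s := (r1 + Rmax 0 (r2 - D)) / 2).
    assert (Hs1 : 0 < s) by (unfold s; pose proof (Rmax_l 0 (r2 - D)); lra).
    assert (Hs2 : s < r1) by (unfold s; apply Rmax_case_strong; intros; lra).
    assert (Hs3 : r2 < D + s) by (unfold s; pose proof (Rmax_r 0 (r2 - D)); lra).
    exists (Some (vaxpy c1 (s / D) (fun i => c1 i - c2 i))). split.
    + apply interior_CBall_intro; auto. apply inRd_axpy; auto; apply inRd_sub; auto.
      rewrite dist2_sym, dist2_axpy_self. change (dot d (fun i => c1 i - c2 i) (fun i => c1 i - c2 i)) with (dist2 d c1 c2).
      rewrite <- HD2. replace (s / D * (s / D) * (D * D)) with (s * s) by (field; lra). nra.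
    + apply interior_CExt_intro; auto. apply inRd_axpy; auto; apply inRd_sub; auto.
      rewrite dist2_axpy. change (dot d (fun i => c1 i - c2 i) (fun i => c1 i - c2 i)) with (dist2 d c1 c2).
      rewrite <- HD2. replace (D * D + 2 * (s / D) * (D * D) + s / D * (s / D) * (D * D)) with ((D + s) * (D + s)) by (field; lra). nra.
  - assert (HE : dist2 d c1 c2 = 0) by (rewrite <- HD2, <- HD0; ring).
    pose proof (dist2_zero_pt d c1 c2 HE) as Heq.
    destruct d as [|d']; [lia|].
    set (s := (r1 + r2) / 2).
    assert (E : dist2 (S d') (vaxpy c1 s e0) c1 = s * s) by (rewrite dist2_sym, dist2_axpy_self, dot_e0; ring).
    exists (Some (vaxpy c1 s e0)). split.
    + apply interior_CBall_intro; auto. apply inRd_axpy; auto; apply e0_in.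
      rewrite E. unfold s. nra.
    + apply interior_CExt_intro; auto. apply inRd_axpy; auto; apply e0_in.
      replace (dist2 (S d') (vaxpy c1 s e0) c2) with (dist2 (S d') (vaxpy c1 s e0) c1) by (unfold dist2; apply dot_ext; intros; rewrite Heq; auto).
      rewrite E. unfold s. nra.
Qed.

Lemma BE_meet_bound x : dist2 d x c1 <= r1 ^ 2 -> r2 ^ 2 <= dist2 d x c2 -> r2 <= sqrt (dist2 d c1 c2) + r1.
Proof.
  intros H1 H2. pose proof (dist_triangle d x c1 c2).
  assert (sqrt (dist2 d x c1) <= r1) by (apply sqrt_le_of; [apply dist2_pos|lra|nra]).
  assert (r2 <= sqrt (dist2 d x c2)) by (apply sqrt_ge_of; [apply dist2_pos|lra|nra]). lra.
Qed.

Lemma BE_tangent : 0 < sqrt (dist2 d c1 c2) -> sqrt (dist2 d c1 c2) + r1 = r2 -> tangent d (CBall c1 r1) (CExt c2 r2).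
Proof.
  intros HDp HD. set (D := sqrt (dist2 d c1 c2)) in *.
  assert (HD2 : D * D = dist2 d c1 c2) by (apply sqrt_sqrt, dist2_pos).
  set (p := vaxpy c1 (r1 / D) (fun i => c1 i - c2 i)).
  assert (Hp : inRd d p) by (apply inRd_axpy; auto; apply inRd_sub; auto).
  exists (Some p). simpl. split; [|split].
  - split; auto. unfold p. rewrite dist2_sym, dist2_axpy_self. change (dot d (fun i => c1 i - c2 i) (fun i => c1 i - c2 i)) with (dist2 d c1 c2).
    rewrite <- HD2. right; field; lra.
  - split; auto. unfold p. rewrite dist2_axpy. change (dot d (fun i => c1 i - c2 i) (fun i => c1 i - c2 i)) with (dist2 d c1 c2).
    rewrite <- HD2, <- HD. right; field; lra.
  - intros [x|] Hm1 Hm2; [|destruct Hm1]. destruct Hm1 as [Hx Hx1]; destruct Hm2 as [_ Hx2]. f_equal.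
    apply (dist2_zero_eq d); auto.
    apply Rle_antisym; [|apply dist2_pos].
    unfold p. rewrite dist2_to_axpy.
    rewrite <- (vaxpy_sub' c1 c2) in Hx2 at 1. rewrite dist2_to_axpy in Hx2.
    change (dot d (fun i => c1 i - c2 i) (fun i => c1 i - c2 i)) with (dist2 d c1 c2) in *.
    rewrite <- HD2 in *.
    set (T := dot d (fun i => x i - c1 i) (fun i => c1 i - c2 i)) in *.
    set (a := dist2 d x c1) in *.
    pose proof (dist2_pos d x c1). fold a in H.
    assert (H2T : 2 * T >= 2 * D * r1) by (rewrite <- HD in Hx2; nra).
    apply (Rmult_le_reg_r D); [lra|]. rewrite Rmult_0_l.
    replace ((a - 2 * (r1 / D) * T + r1 / D * (r1 / D) * (D * D)) * D)
      with (D * a - r1 * (2 * T) + r1^2 * D) by (field; lra).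
    nra.
Qed.
End BE.

Section BH.
Variables (d : nat) (c a : vec) (r b : R).
Hypotheses (Hc : inRd d c) (Ha : inRd d a) (HA : 0 < dot d a a) (Hr : 0 < r).

Let N := vnorm d a.
Lemma BH_norm : 0 < N /\ N * N = dot d a a.
Proof. split; [unfold N, vnorm; apply sqrt_lt_R0; auto| apply vnorm_sq]. Qed.

Lemma BH_normal_point t : dist2 d (vaxpy c (- t) a) c = t * t * (N * N) /\ dot d a (vaxpy c (- t) a) = dot d a c - t * (N * N).
Proof.
  destruct BH_norm as [_ HN]. split.
  - rewrite dist2_sym, dist2_axpy_self, HN. ring.
  - rewrite dot_sym, dot_axpy, HN, (dot_sym d c a). ring.
Qed.

Lemma BH_disjoint_bound : disjoint_int d (CBall c r) (HSpace a b) -> r * N <= dot d a c - b.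
Proof.
  intros H. destruct BH_norm as [HN HN2].
  destruct (Rle_or_lt (r * N) (dot d a c - b)) as [|Hlt]; auto. exfalso; apply H.
  set (s := (r + Rmax 0 ((dot d a c - b) / N)) / 2).
  assert (Hs1 : 0 < s) by (unfold s; pose proof (Rmax_l 0 ((dot d a c - b) / N)); lra).
  assert (Hq : (dot d a c - b) / N < r) by (apply (Rmult_lt_reg_r N); auto; field_simplify; lra).
  assert (Hs2 : s < r) by (unfold s; apply Rmax_case_strong; intros; lra).
  assert (Hs3 : (dot d a c - b) / N < s) by (unfold s; pose proof (Rmax_r 0 ((dot d a c - b) / N)); lra).
  destruct (BH_normal_point (s / N)) as [E1 E2].
  exists (Some (vaxpy c (- (s / N)) a)). split.
  - apply interior_CBall_intro; auto. apply inRd_axpy; auto.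
    rewrite E1. replace (s / N * (s / N) * (N * N)) with (s * s) by (field; lra). nra.
  - apply interior_HSpace_intro; auto. apply inRd_axpy; auto.
    rewrite E2. replace (s / N * (N * N)) with (s * N) by (field; lra).
    assert (dot d a c - b < s * N) by (apply (Rmult_lt_compat_r N) in Hs3; auto; field_simplify in Hs3; lra). lra.
Qed.

Lemma BH_meet_bound x : dist2 d x c <= r ^ 2 -> dot d a x <= b -> dot d a c - b <= r * N.
Proof.
  intros H1 H2. destruct BH_norm as [HN HN2].
  pose proof (dot_le_vnorm d a (fun i => c i - x i)). rewrite dot_sub_r in H.
  assert (vnorm d (fun i => c i - x i) <= r). { change (sqrt (dist2 d c x) <= r). rewrite dist2_sym. apply sqrt_le_of; [apply dist2_pos|lra|nra]. }
  fold N in H. assert (N * vnorm d (fun i => c i - x i) <= N * r) by (apply Rmult_le_compat_l; lra). lra.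
Qed.

Lemma BH_tangent : dot d a c - b = r * N -> tangent d (CBall c r) (HSpace a b).
Proof.
  intros HE. destruct BH_norm as [HN HN2].
  destruct (BH_normal_point (r / N)) as [E1 E2].
  set (p := vaxpy c (- (r / N)) a) in *.
  assert (Hp : inRd d p) by (apply inRd_axpy; auto).
  exists (Some p). simpl. split; [|split].
  - split; auto. rewrite E1. right; field; lra.
  - split; auto. rewrite E2. right. replace (r / N * (N * N)) with (r * N) by (field; lra). lra.
  - intros [x|] Hm1 Hm2; [|destruct Hm1]. destruct Hm1 as [Hx Hx1]; destruct Hm2 as [_ Hx2]. f_equal.
    apply (dist2_zero_eq d); auto.
    apply Rle_antisym; [|apply dist2_pos].
    unfold p. rewrite dist2_to_axpy, dot_sub, <- HN2, (dot_sym d x a), (dot_sym d c a).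
    replace (dist2 d x c - 2 * - (r / N) * (dot d a x - dot d a c) + - (r / N) * - (r / N) * (N * N))
      with (dist2 d x c + 2 * (r / N) * (dot d a x - dot d a c) + r * r) by (field; lra).
    assert (dot d a x - dot d a c <= - (r * N)) by lra.
    assert (2 * (r / N) * (dot d a x - dot d a c) <= 2 * (r / N) * (- (r * N))).
    { apply Rmult_le_compat_l; auto. assert (0 < r / N) by (apply Rdiv_lt_0_compat; auto). lra. }
    replace (2 * (r / N) * (- (r * N))) with (- 2 * r * r) in H0 by (field; lra). nra.
Qed.

Lemma BH_disjoint_of : r * N <= dot d a c - b -> disjoint_int d (CBall c r) (HSpace a b).
Proof.
  intros H [[x|] [I1 I2]]; [|destruct I1 as [[] _]].
  destruct BH_norm as [HN HN2].
  apply interior_CBall_elim in I1; auto. apply interior_HSpace_elim in I2; auto.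
  pose proof (dot_le_vnorm d a (fun i => c i - x i)). rewrite dot_sub_r in H0.
  assert (vnorm d (fun i => c i - x i) < r). { change (sqrt (dist2 d c x) < r). rewrite dist2_sym. apply sqrt_lt_of; [apply dist2_pos|lra|nra]. }
  fold N in H0. assert (N * vnorm d (fun i => c i - x i) < N * r) by (apply Rmult_lt_compat_l; lra). lra.
Qed.
End BH.

Section HH.
Variables (d : nat) (a1 a2 : vec) (b1 b2 : R).
Hypotheses (Ha1 : inRd d a1) (Ha2 : inRd d a2) (HA1 : 0 < dot d a1 a1) (HA2 : 0 < dot d a2 a2).
Let N1 := vnorm d a1.
Let N2 := vnorm d a2.
Lemma HH_norms : 0 < N1 /\ N1 * N1 = dot d a1 a1 /\ 0 < N2 /\ N2 * N2 = dot d a2 a2.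
Proof. unfold N1, N2, vnorm. repeat split; try (apply sqrt_lt_R0; auto); apply sqrt_sqrt; lra. Qed.

Definition antipar := forall i, (i < d)%nat -> a2 i / N2 = - (a1 i / N1).

Lemma antipar_dot x : antipar -> dot d a2 x = - (N2 / N1) * dot d a1 x.
Proof.
  intros H. destruct HH_norms as [P1 [E1 [P2 E2]]].
  rewrite (dot_ext d a2 x (fun i => - (N2 / N1) * a1 i) x).
  - apply dot_scal.
  - intros i Hi. specialize (H i Hi). apply (Rmult_eq_reg_r (/ N2)); [|apply Rinv_neq_0_compat; lra].
    replace (a2 i * / N2) with (a2 i / N2) by auto. rewrite H. field; lra.
  - auto.
Qed.

(* Disjoint half-spaces have opposite unit normals: otherwise w = a1/|a1| + a2/|a2|
   is nonzero and points far along -w lie in both interiors. *)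
Lemma HH_antipar_of_disjoint : disjoint_int d (HSpace a1 b1) (HSpace a2 b2) -> antipar.
Proof.
  intros H. destruct HH_norms as [P1 [E1 [P2 E2]]].
  set (w := fun i => (/ N1) * a1 i + (/ N2) * a2 i).
  assert (W1 : dot d a1 w = N1 * (dot d w w / 2)).
  { unfold w. rewrite dot_lin_r, dot_lin, !dot_lin_r, <- E1, <- E2, (dot_sym d a2 a1). field; lra. }
  assert (W2 : dot d a2 w = N2 * (dot d w w / 2)).
  { unfold w. rewrite dot_lin_r, dot_lin, !dot_lin_r, <- E1, <- E2, (dot_sym d a2 a1). field; lra. }
  destruct (Rle_lt_or_eq_dec _ _ (dot_pos d w)) as [Hw|Hw].
  - exfalso. apply H.
    set (K := Rabs b1 / N1 + Rabs b2 / N2 + 1).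
    assert (HK1 : Rabs b1 / N1 < K /\ Rabs b2 / N2 < K /\ 1 <= K).
    { unfold K. pose proof (Rabs_pos b1); pose proof (Rabs_pos b2).
      assert (0 <= Rabs b1 / N1) by (apply Rmult_le_pos; [lra|left; apply Rinv_0_lt_compat; lra]).
      assert (0 <= Rabs b2 / N2) by (apply Rmult_le_pos; [lra|left; apply Rinv_0_lt_compat; lra]). lra. }
    set (t := 2 * K / dot d w w).
    assert (Hin : inRd d (vaxpy vzero (- t) w)).
    { apply inRd_axpy; [intros ? ?; reflexivity|]. unfold w. intros i Hi. rewrite Ha1, Ha2 by auto. ring. }
    exists (Some (vaxpy vzero (- t) w)). split; apply interior_HSpace_intro; auto.
    + rewrite dot_sym, dot_axpy, (dot_sym d w a1), W1.
      replace (dot d vzero a1) with 0 by (symmetry; apply dot_zero_l).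
      unfold t. replace (0 + - (2 * K / dot d w w) * (N1 * (dot d w w / 2))) with (- (K * N1)) by (field; lra).
      pose proof (Rle_abs (- b1)). rewrite Rabs_Ropp in H0.
      destruct HK1 as [HK1 [_ HK3]]. apply (Rmult_lt_compat_r N1) in HK1; [|lra].
      replace (Rabs b1 / N1 * N1) with (Rabs b1) in HK1 by (field; lra). nra.
    + rewrite dot_sym, dot_axpy, (dot_sym d w a2), W2.
      replace (dot d vzero a2) with 0 by (symmetry; apply dot_zero_l).
      unfold t. replace (0 + - (2 * K / dot d w w) * (N2 * (dot d w w / 2))) with (- (K * N2)) by (field; lra).
      pose proof (Rle_abs (- b2)). rewrite Rabs_Ropp in H0.
      destruct HK1 as [_ [HK1 HK3]]. apply (Rmult_lt_compat_r N2) in HK1; [|lra].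
      replace (Rabs b2 / N2 * N2) with (Rabs b2) in HK1 by (field; lra). nra.
  - intros i Hi. pose proof (dot_zero d w (eq_sym Hw) i Hi). unfold w in H0.
    unfold Rdiv. lra.
Qed.

Lemma HH_disjoint_bound : disjoint_int d (HSpace a1 b1) (HSpace a2 b2) -> antipar /\ b1 / N1 + b2 / N2 <= 0.
Proof.
  intros H. pose proof (HH_antipar_of_disjoint H) as AP. destruct HH_norms as [P1 [E1 [P2 E2]]].
  split; auto.
  destruct (Rle_or_lt (b1 / N1 + b2 / N2) 0) as [|Hlt]; auto. exfalso. apply H.
  set (s := (b1 / N1 - b2 / N2) / (2 * N1)).
  assert (Hin : inRd d (vaxpy vzero s a1)) by (apply inRd_axpy; auto; intros ? ?; reflexivity).
  exists (Some (vaxpy vzero s a1)). split; apply interior_HSpace_intro; auto.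
  - rewrite dot_sym, dot_axpy, (dot_zero_l d a1 : dot d vzero a1 = 0), <- E1. unfold s.
    replace (0 + (b1 / N1 - b2 / N2) / (2 * N1) * (N1 * N1)) with ((b1 - N1 * (b2 / N2)) / 2) by (field; lra).
    assert (b1 / N1 * N1 = b1) by (field; lra).
    assert (- (N1 * (b2 / N2)) < b1). { apply (Rmult_lt_reg_r (/ N1)). apply Rinv_0_lt_compat; lra.
      replace (- (N1 * (b2 / N2)) * / N1) with (- (b2 / N2)) by (field; lra). fold (b1 / N1). lra. }
    lra.
  - rewrite antipar_dot by auto. rewrite dot_sym, dot_axpy, (dot_zero_l d a1 : dot d vzero a1 = 0), <- E1. unfold s.
    replace (- (N2 / N1) * (0 + (b1 / N1 - b2 / N2) / (2 * N1) * (N1 * N1))) with ((b2 - N2 * (b1 / N1)) / 2) by (field; lra).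
    assert (- (N2 * (b1 / N1)) < b2). { apply (Rmult_lt_reg_r (/ N2)). apply Rinv_0_lt_compat; lra.
      replace (- (N2 * (b1 / N1)) * / N2) with (- (b1 / N1)) by (field; lra). fold (b2 / N2). lra. }
    lra.
Qed.

Lemma HH_meet_bound x : antipar -> dot d a1 x <= b1 -> dot d a2 x <= b2 -> 0 <= b1 / N1 + b2 / N2.
Proof.
  intros AP H1 H2. destruct HH_norms as [P1 [E1 [P2 E2]]]. rewrite antipar_dot in H2 by auto.
  assert (- (N2 / N1) * dot d a1 x * / N2 <= b2 / N2) by (apply Rmult_le_compat_r; [left; apply Rinv_0_lt_compat; lra| lra]).
  replace (- (N2 / N1) * dot d a1 x * / N2) with (- (dot d a1 x / N1)) in H by (field; lra).
  assert (dot d a1 x / N1 <= b1 / N1) by (apply Rmult_le_compat_r; [left; apply Rinv_0_lt_compat; lra| lra]).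
  lra.
Qed.

Lemma HH_tangent : antipar -> b1 / N1 + b2 / N2 < 0 -> tangent d (HSpace a1 b1) (HSpace a2 b2).
Proof.
  intros AP Hb. exists None. simpl. split; [auto|split; [auto|]].
  intros [x|] Hm1 Hm2; auto. destruct Hm1 as [_ H1], Hm2 as [_ H2].
  pose proof (HH_meet_bound x AP H1 H2). lra.
Qed.

Lemma HH_disjoint_of : antipar -> b1 / N1 + b2 / N2 <= 0 -> disjoint_int d (HSpace a1 b1) (HSpace a2 b2).
Proof.
  intros AP Hb [[x|] [I1 I2]].
  - destruct HH_norms as [P1 [E1 [P2 E2]]].
    apply interior_HSpace_elim in I1; auto. apply interior_HSpace_elim in I2; auto. rewrite antipar_dot in I2 by auto.
    assert (- (N2 / N1) * dot d a1 x * / N2 < b2 / N2) by (apply Rmult_lt_compat_r; [apply Rinv_0_lt_compat; lra| lra]).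
    replace (- (N2 / N1) * dot d a1 x * / N2) with (- (dot d a1 x / N1)) in H by (field; lra).
    assert (dot d a1 x / N1 < b1 / N1) by (apply Rmult_lt_compat_r; [apply Rinv_0_lt_compat; lra| lra]).
    lra.
  - apply (not_interior_HSpace_infinity d a1 b1); auto.
Qed.
End HH.

(* Two exteriors, or an exterior and a half-space, always overlap near infinity
   (resp. far along the inward normal), so they never occur in a packing. *)
Lemma EE_not_disjoint d c1 r1 c2 r2 : 0 < r1 -> 0 < r2 -> ~ disjoint_int d (CExt c1 r1) (CExt c2 r2).
Proof. intros H1 H2 H. apply H. exists None. split; apply interior_CExt_infinity; auto. Qed.

Lemma EH_not_disjoint d c r a b : inRd d c -> inRd d a -> 0 < dot d a a -> 0 < r -> ~ disjoint_int d (CExt c r) (HSpace a b).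
Proof.
  intros Hc Ha HA Hr H. apply H.
  set (A := dot d a a) in *. set (K := Rabs (dot d a c) + Rabs b + r + 1). set (t := K * (1 + / A)).
  pose proof (Rinv_0_lt_compat A HA).
  assert (E3 : t * A = K * (A + 1)) by (unfold t; field; lra).
  assert (E4 : t * t * A = K * K * (A + 2 + / A)) by (unfold t; field; lra).
  assert (HK : r + 1 <= K) by (unfold K; pose proof (Rabs_pos b); pose proof (Rabs_pos (dot d a c)); lra).
  exists (Some (vaxpy c (- t) a)). split.
  - apply interior_CExt_intro; auto. apply inRd_axpy; auto.
    rewrite dist2_sym, dist2_axpy_self. fold A. replace (- t * - t * A) with (t * t * A) by ring. rewrite E4. nra.
  - apply interior_HSpace_intro; auto. apply inRd_axpy; auto.
    rewrite dot_sym, dot_axpy. fold A.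
    replace (dot d c a + - t * A) with (dot d a c - K * (A + 1)) by (rewrite dot_sym; lra).
    pose proof (Rle_abs (dot d a c)). pose proof (Rabs_pos b). pose proof (Rle_abs (-b)). rewrite Rabs_Ropp in H3.
    assert (K <= K * (A + 1)) by nra. unfold K in *. lra.
Qed.

(* Points of R^(d+2) are written [lift d p X Y] (p in
   R^d and two extra coordinates), with the Lorentz form [lorentz d] of
   signature (d+1,1). *)
Definition lift d (p : vec) (X Y : R) : vec :=
  fun i => if (i <? d)%nat then p i else if (i =? d)%nat then X else if (i =? S d)%nat then Y else 0.
Definition lorentz d (u v : vec) : R := dot d u v + u d * v d - u (S d) * v (S d).
Definition vneg (u : vec) : vec := fun i => - u i.
Definition ball_coords d c r := lift d (fun i => c i / r) ((dot d c c - r ^ 2 - 1) / (2 * r)) ((dot d c c - r ^ 2 + 1) / (2 * r)).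
Definition hs_coords d a b := lift d (fun i => a i / vnorm d a) (b / vnorm d a) (b / vnorm d a).
Definition inv_coords d B : vec :=
  match B with
  | CBall c r => ball_coords d c r
  | CExt c r => vneg (ball_coords d c r)
  | HSpace a b => vneg (hs_coords d a b)
  end.

Lemma lift_at_d d p X Y : lift d p X Y d = X.
Proof. unfold lift. rewrite Nat.ltb_irrefl, Nat.eqb_refl. auto. Qed.
Lemma lift_at_Sd d p X Y : lift d p X Y (S d) = Y.
Proof. unfold lift. replace (S d <? d)%nat with false by (symmetry; apply Nat.ltb_ge; lia).
  replace (S d =? d)%nat with false by (symmetry; apply Nat.eqb_neq; lia). rewrite Nat.eqb_refl. auto. Qed.
Lemma lift_below d p X Y i : (i < d)%nat -> lift d p X Y i = p i.
Proof. intros. unfold lift. replace (i <? d)%nat with true by (symmetry; apply Nat.ltb_lt; lia). auto. Qed.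

Lemma lorentz_lift d p X Y p' X' Y' : lorentz d (lift d p X Y) (lift d p' X' Y') = dot d p p' + X * X' - Y * Y'.
Proof. unfold lorentz. rewrite !lift_at_d, !lift_at_Sd. f_equal. f_equal. apply dot_ext; intros; apply lift_below; auto. Qed.

Lemma dot_vneg_l d u v : dot d (vneg u) v = - dot d u v.
Proof. unfold vneg. induction d; simpl; [ring|]. rewrite IHd. ring. Qed.
Lemma dot_vneg_r d u v : dot d u (vneg v) = - dot d u v.
Proof. rewrite dot_sym, dot_vneg_l, dot_sym; auto. Qed.
Lemma lorentz_neg_l d u v : lorentz d (vneg u) v = - lorentz d u v.
Proof. unfold lorentz. rewrite dot_vneg_l. unfold vneg. ring. Qed.
Lemma lorentz_neg_r d u v : lorentz d u (vneg v) = - lorentz d u v.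
Proof. unfold lorentz. rewrite dot_vneg_r. unfold vneg. ring. Qed.
Lemma lorentz_sym d u v : lorentz d u v = lorentz d v u.
Proof. unfold lorentz. rewrite dot_sym. ring. Qed.

Lemma lorentz_lin d a b u w z : lorentz d (fun k => a * u k + b * w k) z = a * lorentz d u z + b * lorentz d w z.
Proof. unfold lorentz. rewrite dot_lin. ring. Qed.
Lemma lorentz_scal d a u z : lorentz d (fun k => a * u k) z = a * lorentz d u z.
Proof. unfold lorentz. rewrite dot_scal. ring. Qed.
Lemma lorentz_add d u w z : lorentz d (fun k => u k + w k) z = lorentz d u z + lorentz d w z.
Proof. unfold lorentz. rewrite dot_add. ring. Qed.
Lemma lorentz_sub d u w z : lorentz d (fun k => u k - w k) z = lorentz d u z - lorentz d w z.
Proof. unfold lorentz. rewrite dot_sub. ring. Qed.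
Lemma lorentz_zero d u z : (forall k, u k = 0) -> lorentz d u z = 0.
Proof. intros H. replace u with (fun _ : nat => 0) by (apply functional_extensionality; intros; rewrite H; auto).
  unfold lorentz. rewrite dot_zero_l. ring. Qed.
Lemma lorentz_sum d n (F : nat -> vec) z : lorentz d (fun k => sumR n (fun i => F i k)) z = sumR n (fun i => lorentz d (F i) z).
Proof.
  induction n.
  - simpl. apply lorentz_zero; auto.
  - simpl. rewrite <- IHn. rewrite <- (Rmult_1_l (lorentz d (fun k => sumR n (fun i => F i k)) z)).
    rewrite <- (Rmult_1_l (lorentz d (F n) z)). rewrite <- lorentz_lin. f_equal. apply functional_extensionality; intros; ring.
Qed.

Lemma lorentz_pos d x s : lorentz d x s = 0 -> lorentz d s s < 0 -> 0 <= lorentz d x x.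
Proof.
  intros H1 H2. unfold lorentz in *.
  pose proof (cauchy_schwarz (S d) x s). simpl dot in H.
  pose proof (dot_pos (S d) x). pose proof (dot_pos (S d) s). simpl dot in H0, H3.
  set (P := dot d x s + x d * s d) in *. set (X := x (S d)) in *. set (S' := s (S d)) in *.
  set (A := dot d x x + x d * x d) in *. set (B := dot d s s + s d * s d) in *.
  assert (P = X * S') by lra. assert (B < S' * S') by lra.
  destruct (Rle_or_lt (X * X) A); [lra|]. exfalso.
  assert (A * B <= A * (S' * S')) by (apply Rmult_le_compat_l; lra).
  assert (A * (S' * S') < X * X * (S' * S')). { apply Rmult_lt_compat_r; nra. }
  rewrite H4 in H. nra.
Qed.

Lemma dot_div d u v a b : a <> 0 -> b <> 0 -> dot d (fun i => u i / a) (fun i => v i / b) = dot d u v / (a * b).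
Proof. intros. induction d; simpl; [field; auto|]. rewrite IHd. field; auto. Qed.

Lemma lorentz_BB d c1 r1 c2 r2 : 0 < r1 -> 0 < r2 ->
  lorentz d (ball_coords d c1 r1) (ball_coords d c2 r2) = (r1 ^ 2 + r2 ^ 2 - dist2 d c1 c2) / (2 * r1 * r2).
Proof.
  intros. unfold ball_coords. rewrite lorentz_lift, dot_div by lra. rewrite dist2_expand. field; lra.
Qed.

Lemma lorentz_BH d c r a b : 0 < r -> 0 < dot d a a ->
  lorentz d (ball_coords d c r) (hs_coords d a b) = (dot d a c - b) / (r * vnorm d a).
Proof.
  intros Hr HA. pose proof (vnorm_pos_strict d a HA). unfold ball_coords, hs_coords. rewrite lorentz_lift, dot_div by lra.
  rewrite (dot_sym d c a). field; lra.
Qed.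

Lemma lorentz_HH d a1 b1 a2 b2 : 0 < dot d a1 a1 -> 0 < dot d a2 a2 ->
  lorentz d (hs_coords d a1 b1) (hs_coords d a2 b2) = dot d a1 a2 / (vnorm d a1 * vnorm d a2).
Proof.
  intros H1 H2. pose proof (vnorm_pos_strict d a1 H1). pose proof (vnorm_pos_strict d a2 H2). unfold hs_coords. rewrite lorentz_lift, dot_div by lra.
  field; lra.
Qed.

Lemma lorentz_self d B : valid_ball d B -> lorentz d (inv_coords d B) (inv_coords d B) = 1.
Proof.
  destruct B as [c r|c r|a b]; simpl; intros [Hc Hr].
  - rewrite lorentz_BB, dist2_self by auto. field; lra.
  - rewrite lorentz_neg_l, lorentz_neg_r, lorentz_BB, dist2_self by auto. field; lra.
  - apply valid_hs_pos in Hr. rewrite lorentz_neg_l, lorentz_neg_r, lorentz_HH by auto. rewrite <- vnorm_sq.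
    pose proof (vnorm_pos_strict d a Hr). field; lra.
Qed.

(* Opposite inversive coordinates, as for a ball and its complement. *)
Definition antipodal d B1 B2 := forall k, inv_coords d B2 k = - inv_coords d B1 k.

Definition lorentz_pair d B1 B2 :=
  lorentz d (inv_coords d B1) (inv_coords d B2) <= -1 /\
  (tangent d B1 B2 -> lorentz d (inv_coords d B1) (inv_coords d B2) = -1) /\
  (lorentz d (inv_coords d B1) (inv_coords d B2) = -1 -> ~ antipodal d B1 B2 -> tangent d B1 B2).

Lemma inRd_inv_coords d B : inRd (S (S d)) (inv_coords d B).
Proof.
  intros k Hk. assert (E : forall p X Y, lift d p X Y k = 0).
  { intros. unfold lift. replace (k <? d)%nat with false by (symmetry; apply Nat.ltb_ge; lia).
    replace (k =? d)%nat with false by (symmetry; apply Nat.eqb_neq; lia).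
    replace (k =? S d)%nat with false by (symmetry; apply Nat.eqb_neq; lia). auto. }
  destruct B; simpl; unfold vneg, ball_coords, hs_coords; rewrite E; ring.
Qed.

Lemma antipodal_no_third d B1 B2 B3 : antipodal d B1 B2 -> lorentz d (inv_coords d B3) (inv_coords d B1) <= -1 -> lorentz d (inv_coords d B3) (inv_coords d B2) <= -1 -> False.
Proof.
  intros Hc H1 H2. replace (inv_coords d B2) with (vneg (inv_coords d B1)) in H2 by (apply functional_extensionality; intros k; rewrite Hc; auto).
  rewrite lorentz_neg_r in H2. lra.
Qed.

Lemma lorentz_pair_sym d B1 B2 : lorentz_pair d B2 B1 -> lorentz_pair d B1 B2.
Proof.
  unfold lorentz_pair; intros [H1 [H2 H3]]. rewrite lorentz_sym. split; [|split]; auto.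
  - intros; apply H2; apply tangent_sym; auto.
  - intros HL Hc. apply tangent_sym. apply H3; auto. intros Hc'. apply Hc. intros k. rewrite Hc'. ring.
Qed.

Lemma lorentz_pair_BB d c1 r1 c2 r2 : inRd d c1 -> inRd d c2 -> 0 < r1 -> 0 < r2 ->
  disjoint_int d (CBall c1 r1) (CBall c2 r2) -> lorentz_pair d (CBall c1 r1) (CBall c2 r2).
Proof.
  intros Hc1 Hc2 Hr1 Hr2 HD. unfold lorentz_pair. simpl. rewrite lorentz_BB by auto.
  pose proof (BB_disjoint_bound d c1 c2 r1 r2 Hc1 Hc2 Hr1 Hr2 HD) as H1.
  assert (E : forall X, X / (2 * r1 * r2) = -1 <-> X = - (2 * r1 * r2)).
  { intros X; split; intros H. replace X with (X / (2*r1*r2) * (2*r1*r2)) by (field; lra). rewrite H; ring.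
    rewrite H; field; lra. }
  split; [|split].
  - apply (Rmult_le_reg_r (2 * r1 * r2)); [nra|]. field_simplify; [|lra]. nra.
  - intros [[x|] [Hm1 [Hm2 _]]]; [|destruct Hm1]. destruct Hm1 as [_ Hm1], Hm2 as [_ Hm2].
    pose proof (BB_meet_bound d c1 c2 r1 r2 Hr1 Hr2 x Hm1 Hm2). apply E. nra.
  - intros HL _. apply E in HL. apply BB_tangent; auto. nra.
Qed.

Lemma lorentz_pair_BE d c1 r1 c2 r2 : (1 <= d)%nat -> inRd d c1 -> inRd d c2 -> 0 < r1 -> 0 < r2 ->
  disjoint_int d (CBall c1 r1) (CExt c2 r2) -> lorentz_pair d (CBall c1 r1) (CExt c2 r2).
Proof.
  intros Hd Hc1 Hc2 Hr1 Hr2 HD. unfold lorentz_pair. simpl. rewrite lorentz_neg_r, lorentz_BB by auto.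
  pose proof (BE_disjoint_bound d c1 c2 r1 r2 Hd Hc1 Hc2 Hr1 Hr2 HD) as H1.
  set (D := sqrt (dist2 d c1 c2)) in *.
  assert (HD2 : D * D = dist2 d c1 c2) by (apply sqrt_sqrt, dist2_pos).
  pose proof (sqrt_pos (dist2 d c1 c2)). fold D in H.
  rewrite <- HD2.
  assert (E : forall X, - (X / (2 * r1 * r2)) = -1 <-> X = 2 * r1 * r2).
  { intros X; split; intros H'. replace X with (X / (2*r1*r2) * (2*r1*r2)) by (field; lra).
    replace (X / (2*r1*r2)) with 1 by lra. ring.
    rewrite H'; field; lra. }
  split; [|split].
  - assert (0 <= (r1 ^ 2 + r2 ^ 2 - D * D - 2 * r1 * r2) / (2 * r1 * r2)).
    { apply Rmult_le_pos; [nra|left; apply Rinv_0_lt_compat; nra]. }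
    replace ((r1 ^ 2 + r2 ^ 2 - D * D - 2 * r1 * r2) / (2 * r1 * r2)) with ((r1 ^ 2 + r2 ^ 2 - D * D) / (2 * r1 * r2) - 1) in H0 by (field; lra).
    lra.
  - intros [[x|] [Hm1 [Hm2 _]]]; [|destruct Hm1]. destruct Hm1 as [_ Hm1], Hm2 as [_ Hm2].
    pose proof (BE_meet_bound d c1 c2 r1 r2 Hr1 Hr2 x Hm1 Hm2). fold D in H0. apply E.
    assert (D = r2 - r1) by lra. subst D. rewrite H2. ring.
  - intros HL Hnc. apply E in HL.
    assert (Dr_ge3 : D = r2 - r1) by nra.
    destruct (Rle_lt_or_eq_dec _ _ H) as [Hpos|Hz].
    + apply BE_tangent; auto. fold D; lra.
    + exfalso. apply Hnc. assert (r1 = r2) by lra. subst r2.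
      assert (Hz0 : dist2 d c1 c2 = 0) by (rewrite <- HD2, <- Hz; ring).
      pose proof (dist2_zero_pt d c1 c2 Hz0) as Heq.
      intros k. simpl. unfold vneg. f_equal. unfold ball_coords, lift.
      destruct (k <? d)%nat eqn:Hk.
      * apply Nat.ltb_lt in Hk. rewrite Heq; auto.
      * rewrite (dot_ext d c2 c2 c1 c1) by (intros; rewrite Heq; auto). auto.
Qed.

Lemma lorentz_pair_BH d c r a b : inRd d c -> inRd d a -> 0 < dot d a a -> 0 < r ->
  disjoint_int d (CBall c r) (HSpace a b) -> lorentz_pair d (CBall c r) (HSpace a b).
Proof.
  intros Hc Ha HA Hr HD. unfold lorentz_pair. simpl. rewrite lorentz_neg_r, lorentz_BH by auto.
  pose proof (BH_disjoint_bound d c a r b Hc Ha HA Hr HD) as H1.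
  pose proof (vnorm_pos_strict d a HA) as HN.
  assert (E : forall X, - (X / (r * vnorm d a)) = -1 <-> X = r * vnorm d a).
  { intros X; split; intros H'. replace X with (X / (r * vnorm d a) * (r * vnorm d a)) by (field; lra).
    replace (X / (r * vnorm d a)) with 1 by lra. ring.
    rewrite H'; field; lra. }
  split; [|split].
  - assert (r * vnorm d a / (r * vnorm d a) <= (dot d a c - b) / (r * vnorm d a)).
    { apply Rmult_le_compat_r; [left; apply Rinv_0_lt_compat; nra| lra]. }
    replace (r * vnorm d a / (r * vnorm d a)) with 1 in H by (field; lra). lra.
  - intros [[x|] [Hm1 [Hm2 _]]]; [|destruct Hm1]. destruct Hm1 as [_ Hm1], Hm2 as [_ Hm2].
    pose proof (BH_meet_bound d c a r b HA Hr x Hm1 Hm2). apply E. lra.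
  - intros HL _. apply E in HL. apply BH_tangent; auto.
Qed.

Lemma lorentz_pair_HH d a1 b1 a2 b2 : inRd d a1 -> inRd d a2 -> 0 < dot d a1 a1 -> 0 < dot d a2 a2 ->
  disjoint_int d (HSpace a1 b1) (HSpace a2 b2) -> lorentz_pair d (HSpace a1 b1) (HSpace a2 b2).
Proof.
  intros Ha1 Ha2 HA1 HA2 HD. unfold lorentz_pair. simpl. rewrite lorentz_neg_r, lorentz_neg_l, lorentz_HH by auto.
  destruct (HH_disjoint_bound d a1 a2 b1 b2 Ha1 Ha2 HA1 HA2 HD) as [AP Hb].
  pose proof (vnorm_pos_strict d a1 HA1). pose proof (vnorm_pos_strict d a2 HA2).
  assert (HL : - - (dot d a1 a2 / (vnorm d a1 * vnorm d a2)) = -1).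
  { rewrite dot_sym, (antipar_dot d a1 a2 HA1 HA2 a1 AP), <- vnorm_sq. field; lra. }
  rewrite HL. split; [lra|split; [auto|]].
  intros _ Hnc. apply HH_tangent; auto.
  destruct (Rle_lt_or_eq_dec _ _ Hb) as [|Hz]; auto. exfalso; apply Hnc.
  intros k. simpl. unfold vneg. f_equal. unfold hs_coords, lift.
  destruct (k <? d)%nat eqn:Hk.
  - apply Nat.ltb_lt in Hk. apply AP; auto.
  - destruct (k =? d)%nat; [lra|]. destruct (k =? S d)%nat; [lra|ring].
Qed.

Lemma packing_pair_lorentz d B1 B2 : (1 <= d)%nat -> valid_ball d B1 -> valid_ball d B2 -> disjoint_int d B1 B2 -> lorentz_pair d B1 B2.
Proof.
  intros Hd V1 V2 HD.
  destruct B1 as [c1 r1|c1 r1|a1 b1], B2 as [c2 r2|c2 r2|a2 b2]; simpl in V1, V2;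
    destruct V1 as [V1 W1], V2 as [V2 W2].
  - apply lorentz_pair_BB; auto.
  - apply lorentz_pair_BE; auto.
  - apply lorentz_pair_BH; auto. apply valid_hs_pos; auto.
  - apply lorentz_pair_sym, lorentz_pair_BE; auto. apply disjoint_int_sym; auto.
  - exfalso; apply (EE_not_disjoint d c1 r1 c2 r2); auto.
  - exfalso; apply (EH_not_disjoint d c1 r1 a2 b2); auto. apply valid_hs_pos; auto.
  - apply lorentz_pair_sym, lorentz_pair_BH; auto. apply valid_hs_pos; auto. apply disjoint_int_sym; auto.
  - exfalso; apply (EH_not_disjoint d c2 r2 a1 b1); auto. apply valid_hs_pos; auto. apply disjoint_int_sym; auto.
  - apply lorentz_pair_HH; auto; apply valid_hs_pos; auto.
Qed.

(* Linear dependence of n+1 vectors in R^n, by elimination of the last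
   coordinate.  [skip i0] enumerates the indices different from i0. *)
Definition skip (i0 i : nat) : nat := if (i <? i0)%nat then i else S i.

Lemma skip_ne i0 i : skip i0 i <> i0.
Proof. unfold skip. destruct (Nat.ltb_spec i i0); lia. Qed.
Lemma skip_le i0 i n : (i <= n)%nat -> (skip i0 i <= S n)%nat.
Proof. unfold skip. destruct (Nat.ltb_spec i i0); lia. Qed.

Lemma sumR_skip n i0 g : (i0 <= n)%nat -> sumR (S n) g = g i0 + sumR n (fun i => g (skip i0 i)).
Proof.
  induction n; intros Hi.
  - assert (i0 = 0%nat) by lia. subst. simpl. ring.
  - destruct (Nat.eq_dec i0 (S n)) as [->|Hne].
    + change (sumR (S (S n)) g) with (sumR (S n) g + g (S n)).
      rewrite (sumR_ext (S n) (fun i => g (skip (S n) i)) g). ring.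
      intros i Hi'. unfold skip. replace (i <? S n)%nat with true by (symmetry; apply Nat.ltb_lt; lia). auto.
    + change (sumR (S (S n)) g) with (sumR (S n) g + g (S n)). rewrite IHn by lia.
      change (sumR (S n) (fun i => g (skip i0 i))) with (sumR n (fun i => g (skip i0 i)) + g (skip i0 n)).
      replace (skip i0 n) with (S n) by (unfold skip; replace (n <? i0)%nat with false by (symmetry; apply Nat.ltb_ge; lia); auto). ring.
Qed.

(* [lin_dep n F]: the n+1 vectors F 0, ..., F n satisfy a nontrivial linear
   relation. *)
Definition lin_dep (n : nat) (F : nat -> vec) : Prop :=
  exists a : nat -> R, (exists i, (i <= n)%nat /\ a i <> 0) /\
    forall k, sumR (S n) (fun i => a i * F i k) = 0.

Lemma lin_dep_succ n F : lin_dep n F -> lin_dep (S n) F.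
Proof.
  intros [b [[i1 [Hi1 Hb]] Hsum]].
  exists (fun i => if (i <=? n)%nat then b i else 0). split.
  - exists i1. split; [lia|]. replace (i1 <=? n)%nat with true by (symmetry; apply Nat.leb_le; lia). auto.
  - intros k. change (sumR (S (S n)) ?f) with (sumR (S n) f + f (S n)).
    rewrite (sumR_ext (S n) _ (fun i => b i * F i k)).
    + rewrite Hsum. replace (S n <=? n)%nat with false by (symmetry; apply Nat.leb_gt; lia). ring.
    + intros i Hi. replace (i <=? n)%nat with true by (symmetry; apply Nat.leb_le; lia). auto.
Qed.

Lemma lin_dep_eliminate m F i0 : (i0 <= S m)%nat -> F i0 m <> 0 ->
  lin_dep m (fun i k => F (skip i0 i) k - (F (skip i0 i) m / F i0 m) * F i0 k) ->
  lin_dep (S m) F.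
Proof.
  intros Hi0 Hnz [b [[i1 [Hi1 Hb]] Hsum]].
  set (A0 := - sumR (S m) (fun i => b i * F (skip i0 i) m) / F i0 m).
  set (a := fun j => if (j =? i0)%nat then A0 else b (if (j <? i0)%nat then j else (j - 1)%nat)).
  assert (Ha : forall i, a (skip i0 i) = b i).
  { intros i. unfold a. replace (skip i0 i =? i0)%nat with false by (symmetry; apply Nat.eqb_neq, skip_ne).
    unfold skip. destruct (Nat.ltb_spec i i0).
    - replace (i <? i0)%nat with true by (symmetry; apply Nat.ltb_lt; lia). auto.
    - replace (S i <? i0)%nat with false by (symmetry; apply Nat.ltb_ge; lia). f_equal; lia. }
  exists a. split.
  - exists (skip i0 i1). split; [apply skip_le; auto|]. rewrite Ha; auto.
  - intros k. rewrite (sumR_skip (S m) i0) by auto.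
    rewrite (sumR_ext (S m) _ (fun i => b i * F (skip i0 i) k)) by (intros; rewrite Ha; auto).
    specialize (Hsum k).
    rewrite (sumR_ext (S m) _ (fun i => b i * F (skip i0 i) k + (- F i0 k / F i0 m) * (b i * F (skip i0 i) m))) in Hsum
      by (intros; field; auto).
    rewrite sumR_plus, sumR_scal in Hsum.
    unfold a. rewrite Nat.eqb_refl. unfold A0.
    replace (- sumR (S m) (fun i => b i * F (skip i0 i) m) / F i0 m * F i0 k) with
      (- F i0 k / F i0 m * sumR (S m) (fun i => b i * F (skip i0 i) m)) by (field; auto).
    lra.
Qed.

Lemma lin_dep_short n (F : nat -> vec) : (forall i, (i <= n)%nat -> inRd n (F i)) -> lin_dep n F.
Proof.
  revert F. induction n as [|m IH]; intros F HF.
  - exists (fun _ => 1). split; [exists 0%nat; split; [lia|lra]|].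
    intros k. simpl. rewrite (HF 0%nat) by lia. ring.
  - destruct (classic (exists i0, (i0 <= S m)%nat /\ F i0 m <> 0)) as [[i0 [Hi0 Hnz]]|Hall].
    + apply (lin_dep_eliminate m F i0 Hi0 Hnz), IH.
      intros i Hi k Hk. destruct (Nat.eq_dec k m) as [->|Hne]; [field; auto|].
      rewrite !(HF _ (skip_le i0 i m Hi) k), (HF i0 Hi0 k) by lia. ring.
    + apply lin_dep_succ, IH.
      intros i Hi k Hk. destruct (Nat.eq_dec k m) as [->|Hne].
      * destruct (Req_dec (F i m) 0); auto. exfalso; apply Hall; exists i; split; auto; lia.
      * apply HF; lia.
Qed.

(* Let v 0, ..., v (d+m-1) be Lorentz-unit vectors,
   the first d of which have product -1 with every other vector, and all of
   which have pairwise products <= -1.  With s the sum of the clique vectors,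
   [proj j] = v (d+j) - s/(d-2) is orthogonal to the clique; these projections
   span a Euclidean plane, so after normalisation ([gram]) they become unit
   vectors (x j, y j) in R^2 ([circle_model]). *)
Section Core.
Variables (d m : nat) (v : nat -> vec).
Hypotheses (Hd : (3 <= d)%nat) (Hm : (3 <= m)%nat)
  (Hin : forall i, (i < d + m)%nat -> inRd (S (S d)) (v i))
  (Hunit : forall i, (i < d + m)%nat -> lorentz d (v i) (v i) = 1)
  (Hclique : forall i j, (i < d)%nat -> (j < d + m)%nat -> i <> j -> lorentz d (v i) (v j) = -1)
  (Hpack : forall i j, (i < d + m)%nat -> (j < d + m)%nat -> i <> j -> lorentz d (v i) (v j) <= -1).

Let Dr := INR d.
Lemma Dr_ge3 : 3 <= Dr.
Proof. unfold Dr. replace 3 with (INR 3) by (simpl; ring). apply le_INR; auto. Qed.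

Definition sfirst : vec := fun k => sumR d (fun i => v i k).
Let al := / (Dr - 2).
Definition proj (j : nat) : vec := fun k => v (d + j) k - al * sfirst k.
Let dl := Dr / (Dr - 2).
Let rho := 1 + dl.

Lemma lorentz_s_first l : (l < d)%nat -> lorentz d sfirst (v l) = 2 - Dr.
Proof.
  intros Hl. unfold sfirst. rewrite lorentz_sum.
  rewrite (sumR_ext d _ (fun t => 1 * (if (t =? l)%nat then 1 else -1))).
  - rewrite sumR_sign by auto. rewrite sumR_const. unfold Dr. ring.
  - intros t Ht. destruct (Nat.eqb_spec t l) as [->|Hne]. rewrite Hunit by lia; ring. rewrite Hclique by lia; ring.
Qed.

Lemma lorentz_s_rest j : (j < m)%nat -> lorentz d sfirst (v (d + j)) = - Dr.
Proof.
  intros Hj. unfold sfirst. rewrite lorentz_sum.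
  rewrite (sumR_ext d _ (fun _ => -1)). rewrite sumR_const. unfold Dr; ring.
  intros t Ht. apply Hclique; lia.
Qed.

Lemma lorentz_s_s : lorentz d sfirst sfirst = Dr * (2 - Dr).
Proof.
  unfold sfirst at 1. rewrite lorentz_sum. rewrite (sumR_ext d _ (fun _ => 2 - Dr)). rewrite sumR_const. unfold Dr; ring.
  intros t Ht. rewrite lorentz_sym. apply lorentz_s_first; auto.
Qed.

Lemma al_spec : al * (Dr - 2) = 1.
Proof. unfold al. pose proof Dr_ge3. field. lra. Qed.

Lemma lorentz_proj_first j l : (j < m)%nat -> (l < d)%nat -> lorentz d (proj j) (v l) = 0.
Proof.
  intros Hj Hl. unfold proj. rewrite lorentz_sub, lorentz_scal, lorentz_s_first by auto. rewrite (lorentz_sym d (v (d + j))), Hclique by lia.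
  pose proof al_spec. lra.
Qed.

Lemma lorentz_proj_s j : (j < m)%nat -> lorentz d (proj j) sfirst = 0.
Proof.
  intros Hj. rewrite lorentz_sym. unfold sfirst at 1. rewrite lorentz_sum. apply sumR_zero. intros i Hi.
  rewrite lorentz_sym. apply lorentz_proj_first; auto.
Qed.

Lemma lorentz_proj_proj i j : (i < m)%nat -> (j < m)%nat -> lorentz d (proj i) (proj j) = lorentz d (v (d + i)) (v (d + j)) + dl.
Proof.
  intros Hi Hj. unfold proj at 1. rewrite lorentz_sub, lorentz_scal, (lorentz_sym d sfirst (proj j)), lorentz_proj_s by auto.
  rewrite lorentz_sym. unfold proj. rewrite lorentz_sub, lorentz_scal, lorentz_s_rest by auto. rewrite lorentz_sym.
  unfold dl. pose proof Dr_ge3. unfold al in *. field. lra.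
Qed.

Lemma inRd_proj j : (j < m)%nat -> inRd (S (S d)) (proj j).
Proof.
  intros Hj k Hk. unfold proj. rewrite (Hin (d + j)) by (auto; lia).
  unfold sfirst. rewrite (sumR_zero d (fun i => v i k)). ring. intros i Hi. apply Hin; auto; lia.
Qed.

(* The clique vectors are linearly independent: their Gram matrix 2I - J is
   nonsingular for d >= 3. *)
Lemma clique_independent (a : nat -> R) :
  (forall p, (p < d)%nat -> lorentz d (fun k => sumR d (fun t => a t * v t k)) (v p) = 0) ->
  forall p, (p < d)%nat -> a p = 0.
Proof.
  intros Horth.
  assert (Hap : forall p, (p < d)%nat -> 2 * a p - sumR d a = 0).
  { intros p Hp. rewrite <- (sumR_sign d p a Hp).
    transitivity (lorentz d (fun k => sumR d (fun t => a t * v t k)) (v p)); [|apply Horth; auto].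
    rewrite (lorentz_sum d d (fun t k => a t * v t k)). apply sumR_ext. intros t Ht. rewrite lorentz_scal.
    destruct (Nat.eqb_spec t p) as [->|Hne]; [rewrite Hunit by lia | rewrite Hclique by lia]; ring. }
  assert (HS : sumR d a = 0).
  { assert (E : sumR d a = sumR d (fun _ => sumR d a / 2))
      by (apply sumR_ext; intros p Hp; specialize (Hap p Hp); lra).
    rewrite sumR_const in E. fold Dr in E. pose proof Dr_ge3. nra. }
  intros p Hp. specialize (Hap p Hp). lra.
Qed.

(* Any three projections are linearly dependent: together with the d clique
   vectors they are d+3 vectors of R^(d+2), and the clique part of a relation
   vanishes by [clique_independent]. *)
Lemma proj_triple_dep i j l : (i < m)%nat -> (j < m)%nat -> (l < m)%nat ->
  exists la mu nu, ~ (la = 0 /\ mu = 0 /\ nu = 0) /\ forall k, la * proj i k + mu * proj j k + nu * proj l k = 0.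
Proof.
  intros Hi Hj Hl.
  set (F := fun t => if (t <? d)%nat then v t else if (t =? d)%nat then proj i else if (t =? S d)%nat then proj j else proj l).
  assert (HF : forall t, (t <= S (S d))%nat -> inRd (S (S d)) (F t)).
  { intros t Ht. unfold F. destruct (Nat.ltb_spec t d). apply Hin; lia.
    destruct (t =? d)%nat. apply inRd_proj; auto. destruct (t =? S d)%nat; apply inRd_proj; auto. }
  destruct (lin_dep_short (S (S d)) F HF) as [a [[i0 [Hi0 Hai0]] Hs]].
  assert (FE : forall k, sumR (S (S (S d))) (fun t => a t * F t k) =
     sumR d (fun t => a t * v t k) + (a d * proj i k + (a (S d) * proj j k + a (S (S d)) * proj l k))).
  { intros k. simpl sumR. rewrite (sumR_ext d _ (fun t => a t * v t k)).
    - unfold F. rewrite Nat.ltb_irrefl, Nat.eqb_refl.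
      replace (S d <? d)%nat with false by (symmetry; apply Nat.ltb_ge; lia).
      replace (S d =? d)%nat with false by (symmetry; apply Nat.eqb_neq; lia).
      replace (S (S d) <? d)%nat with false by (symmetry; apply Nat.ltb_ge; lia).
      replace (S (S d) =? d)%nat with false by (symmetry; apply Nat.eqb_neq; lia).
      replace (S (S d) =? S d)%nat with false by (symmetry; apply Nat.eqb_neq; lia).
      rewrite Nat.eqb_refl. ring.
    - intros t Ht. unfold F. replace (t <? d)%nat with true by (symmetry; apply Nat.ltb_lt; lia). auto. }
  set (W := fun k => sumR d (fun t => a t * v t k) + (a d * proj i k + (a (S d) * proj j k + a (S (S d)) * proj l k))).
  assert (HW : forall z, lorentz d W z = 0) by (intros z; apply lorentz_zero; intros k; unfold W; rewrite <- FE; auto).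
  assert (Hz : forall p, (p < d)%nat -> a p = 0).
  { apply clique_independent. intros p Hp. specialize (HW (v p)). unfold W in HW.
    rewrite !lorentz_add, !lorentz_scal, !lorentz_proj_first in HW by auto. lra. }
  exists (a d), (a (S d)), (a (S (S d))). split.
  - intros [Z1 [Z2 Z3]]. apply Hai0.
    destruct (Nat.ltb_spec i0 d). apply Hz; auto.
    assert (Hc : (i0 = d \/ i0 = S d \/ i0 = S (S d))%nat) by lia. destruct Hc as [ -> | [ -> | -> ] ]; auto.
  - intros k. specialize (Hs k). rewrite FE in Hs.
    rewrite (sumR_zero d (fun t => a t * v t k)) in Hs. lra. intros t Ht. rewrite Hz; auto; ring.
Qed.

Lemma proj_triple_lorentz i j l la mu nu z : (forall k, la * proj i k + mu * proj j k + nu * proj l k = 0) ->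
  la * lorentz d (proj i) z + mu * lorentz d (proj j) z + nu * lorentz d (proj l) z = 0.
Proof.
  intros H. rewrite <- !lorentz_scal, <- !lorentz_add. apply lorentz_zero. intros k. rewrite <- (H k). ring.
Qed.

(* Gram matrix of the projections, normalised by rho = (2d-2)/(d-2) so that
   the diagonal is 1. *)
Definition gram i j := lorentz d (proj i) (proj j) / rho.

Lemma rho_spec : 1 < rho /\ rho = (2 * Dr - 2) / (Dr - 2).
Proof. unfold rho, dl. pose proof Dr_ge3. split. assert (0 < Dr / (Dr - 2)) by (apply Rdiv_lt_0_compat; lra). lra. field; lra. Qed.

Lemma lorentz_proj_gram i j : (i < m)%nat -> (j < m)%nat -> lorentz d (proj i) (proj j) = rho * gram i j.
Proof. intros. unfold gram. destruct rho_spec. field. lra. Qed.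

Lemma gram_diag i : (i < m)%nat -> gram i i = 1.
Proof. intros Hi. unfold gram. rewrite lorentz_proj_proj, Hunit by lia. unfold rho. destruct rho_spec. unfold rho in H. field. lra. Qed.

Lemma gram_sym i j : gram i j = gram j i.
Proof. unfold gram. rewrite lorentz_sym. auto. Qed.

Lemma gram_le i j : (i < m)%nat -> (j < m)%nat -> i <> j -> gram i j <= 1 / (Dr - 1).
Proof.
  intros Hi Hj Hij. unfold gram. rewrite lorentz_proj_proj by auto. pose proof (Hpack (d + i) (d + j) ltac:(lia) ltac:(lia) ltac:(lia)).
  destruct rho_spec as [Hr1 Hr2]. pose proof Dr_ge3.
  apply (Rmult_le_reg_r rho); [lra|]. replace ((lorentz d (v (d + i)) (v (d + j)) + dl) / rho * rho) with (lorentz d (v (d + i)) (v (d + j)) + dl) by (field; lra).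
  rewrite Hr2. unfold dl. replace (1 / (Dr - 1) * ((2 * Dr - 2) / (Dr - 2))) with (-1 + Dr / (Dr - 2)) by (field; lra). lra.
Qed.

(* The projections lie in the spacelike complement of s, so the Gram matrix is
   a Euclidean one: its entries lie in [-1, 1]. *)
Lemma gram_bounded i j : (i < m)%nat -> (j < m)%nat -> -1 <= gram i j <= 1.
Proof.
  intros Hi Hj. pose proof Dr_ge3. destruct rho_spec as [Hr1 Hr2].
  assert (Hss : lorentz d sfirst sfirst < 0) by (rewrite lorentz_s_s; nra).
  assert (P1 : 0 <= lorentz d (fun k => proj i k + proj j k) (fun k => proj i k + proj j k)).
  { apply (lorentz_pos d _ sfirst); auto. rewrite lorentz_add, !lorentz_proj_s by auto. ring. }
  assert (P2 : 0 <= lorentz d (fun k => proj i k - proj j k) (fun k => proj i k - proj j k)).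
  { apply (lorentz_pos d _ sfirst); auto. rewrite lorentz_sub, !lorentz_proj_s by auto. ring. }
  rewrite lorentz_add, (lorentz_sym d (proj i)), (lorentz_sym d (proj j)), !lorentz_add in P1.
  rewrite lorentz_sub, (lorentz_sym d (proj i)), (lorentz_sym d (proj j)), !lorentz_sub in P2.
  rewrite !lorentz_proj_gram in P1, P2 by auto. rewrite !gram_diag in P1, P2 by auto.
  rewrite (gram_sym j i) in P1, P2. split; nra.
Qed.

Lemma proj_triple_gram i j l la mu nu z : (z < m)%nat -> (i < m)%nat -> (j < m)%nat -> (l < m)%nat ->
  (forall k, la * proj i k + mu * proj j k + nu * proj l k = 0) ->
  la * gram i z + mu * gram j z + nu * gram l z = 0.
Proof.
  intros Hz Hi Hj Hl H. pose proof (proj_triple_lorentz i j l la mu nu (proj z) H).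
  rewrite !lorentz_proj_gram in H0 by auto. destruct rho_spec. nra.
Qed.

(* Some projection proj s is not parallel to proj 0 (checked among proj 1 and
   proj 2, using that three projections are dependent). *)
Lemma gram_second_axis : exists s, (s < m)%nat /\ s <> 0%nat /\ -1 < gram 0 s < 1.
Proof.
  pose proof Dr_ge3.
  assert (Hlt : forall j, (j < m)%nat -> j <> 0%nat -> gram 0 j < 1).
  { intros j Hj Hj0. pose proof (gram_le 0 j ltac:(lia) Hj ltac:(lia)).
    assert (1 / (Dr - 1) < 1) by (apply (Rmult_lt_reg_r (Dr - 1)); [lra|]; field_simplify; lra). lra. }
  destruct (Rlt_or_le (-1) (gram 0 1)) as [h1|h1].
  { exists 1%nat. split; [lia|split; [lia|]]. split; [auto| apply Hlt; lia]. }
  destruct (Rlt_or_le (-1) (gram 0 2)) as [h2|h2].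
  { exists 2%nat. split; [lia|split; [lia|]]. split; [auto| apply Hlt; lia]. }
  exfalso.
  pose proof (gram_bounded 0 1 ltac:(lia) ltac:(lia)). pose proof (gram_bounded 0 2 ltac:(lia) ltac:(lia)).
  assert (E1 : gram 0 1 = -1) by lra. assert (E2 : gram 0 2 = -1) by lra.
  pose proof (gram_le 1 2 ltac:(lia) ltac:(lia) ltac:(lia)).
  assert (1 / (Dr - 1) < 1) by (apply (Rmult_lt_reg_r (Dr - 1)); [lra|]; field_simplify; lra).
  destruct (proj_triple_dep 0 1 2 ltac:(lia) ltac:(lia) ltac:(lia)) as [la [mu [nu [Hnz Hrel]]]].
  pose proof (proj_triple_gram 0 1 2 la mu nu 0 ltac:(lia) ltac:(lia) ltac:(lia) ltac:(lia) Hrel) as G0.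
  pose proof (proj_triple_gram 0 1 2 la mu nu 1 ltac:(lia) ltac:(lia) ltac:(lia) ltac:(lia) Hrel) as G1.
  pose proof (proj_triple_gram 0 1 2 la mu nu 2 ltac:(lia) ltac:(lia) ltac:(lia) ltac:(lia) Hrel) as G2.
  rewrite !gram_diag in G0, G1, G2 by lia.
  rewrite (gram_sym 1 0), (gram_sym 2 0), E1, E2 in G0. rewrite E1 in G1. rewrite E2 in G2. rewrite (gram_sym 2 1) in G1.
  set (t := gram 1 2) in *.
  assert (Hnu : (t - 1) * nu = 0) by lra. assert (Hmu : (t - 1) * mu = 0) by lra.
  apply Rmult_integral in Hnu. apply Rmult_integral in Hmu.
  apply Hnz. destruct Hnu as [|Hnu]; [lra|]. destruct Hmu as [|Hmu]; [lra|]. repeat split; lra.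
Qed.

Lemma proj_span s j : (s < m)%nat -> s <> 0%nat -> -1 < gram 0 s < 1 -> (j < m)%nat ->
  exists be ga, forall k, proj j k = be * proj 0 k + ga * proj s k.
Proof.
  intros Hs Hs0 [Hk1 Hk2] Hj.
  destruct (proj_triple_dep 0 s j ltac:(lia) Hs Hj) as [la [mu [nu [Hnz Hrel]]]].
  destruct (Req_dec nu 0) as [Hnu|Hnu].
  - exfalso. subst nu.
    pose proof (proj_triple_gram 0 s j la mu 0 0 ltac:(lia) ltac:(lia) Hs Hj Hrel) as G0.
    pose proof (proj_triple_gram 0 s j la mu 0 s Hs ltac:(lia) Hs Hj Hrel) as G1.
    rewrite !gram_diag in G0, G1 by lia. rewrite (gram_sym s 0) in G0.
    set (kk := gram 0 s) in *.
    assert (la * (1 - kk * kk) = 0) by nra. apply Rmult_integral in H. destruct H as [Hla|]; [|nra].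
    subst la. assert (mu = 0) by lra. apply Hnz; repeat split; lra.
  - exists (- la / nu), (- mu / nu). intros k. specialize (Hrel k).
    apply (Rmult_eq_reg_l nu); auto. field_simplify; auto. lra.
Qed.

Lemma gram_of_span s i b g z : (s < m)%nat -> (i < m)%nat -> (z < m)%nat ->
  (forall k, proj i k = b * proj 0 k + g * proj s k) -> gram i z = b * gram 0 z + g * gram s z.
Proof.
  intros Hs Hi Hz Hbg.
  assert (Hrel : forall k, b * proj 0 k + g * proj s k + -1 * proj i k = 0) by (intros k; rewrite Hbg; ring).
  pose proof (proj_triple_gram 0 s i b g (-1) z Hz ltac:(lia) Hs Hi Hrel). lra.
Qed.

(* Planar coordinates in the orthonormal frame obtained from proj 0 and proj s
   by Gram-Schmidt. *)
Definition plane_x (j : nat) : R := gram 0 j.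
Definition plane_y (s j : nat) : R := (gram s j - gram 0 s * gram 0 j) / sqrt (1 - gram 0 s * gram 0 s).

Lemma gram_planar s i j : (s < m)%nat -> s <> 0%nat -> -1 < gram 0 s < 1 -> (i < m)%nat -> (j < m)%nat ->
  gram i j = plane_x i * plane_x j + plane_y s i * plane_y s j.
Proof.
  intros Hs Hs0 Hk Hi Hj. unfold plane_x, plane_y.
  set (kk := gram 0 s) in *.
  set (sg := sqrt (1 - kk * kk)).
  assert (Hsg2 : sg * sg = 1 - kk * kk) by (apply sqrt_sqrt; nra).
  assert (Hsgp : 0 < sg) by (apply sqrt_lt_R0; nra).
  destruct (proj_span s i Hs Hs0 Hk Hi) as [bi [gi Hbi]].
  destruct (proj_span s j Hs Hs0 Hk Hj) as [bj [gj Hbj]].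
  pose proof (gram_of_span s i bi gi j Hs Hi Hj Hbi) as A1.
  pose proof (gram_of_span s j bj gj 0 Hs Hj ltac:(lia) Hbj) as A2.
  pose proof (gram_of_span s j bj gj s Hs Hj Hs Hbj) as A3.
  pose proof (gram_of_span s i bi gi 0 Hs Hi ltac:(lia) Hbi) as A4.
  pose proof (gram_of_span s i bi gi s Hs Hi Hs Hbi) as A5.
  rewrite !gram_diag in A2, A3, A4, A5 by lia.
  rewrite (gram_sym s 0) in A2, A4. fold kk in A2, A3, A4, A5.
  rewrite (gram_sym 0 i), (gram_sym s i), (gram_sym 0 j), (gram_sym s j), A2, A3, A4, A5, A1.
  rewrite (gram_sym 0 j), (gram_sym s j), A2, A3.
  assert (Y : forall b g, (b * kk + g * 1 - kk * (b * 1 + g * kk)) / sg = g * sg).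
  { intros b g. replace (b * kk + g * 1 - kk * (b * 1 + g * kk)) with (g * (sg * sg)) by (rewrite Hsg2; ring).
    field. lra. }
  rewrite !Y. replace (gi * sg * (gj * sg)) with (gi * gj * (sg * sg)) by ring. rewrite Hsg2. ring.
Qed.

Lemma circle_model : exists x y : nat -> R, x 0%nat = 1 /\ y 0%nat = 0 /\
  (forall i, (i < m)%nat -> x i * x i + y i * y i = 1) /\
  (forall i j, (i < m)%nat -> (j < m)%nat ->
     lorentz d (v (d + i)) (v (d + j)) = (1 + INR d / (INR d - 2)) * (x i * x j + y i * y j) - INR d / (INR d - 2)).
Proof.
  destruct gram_second_axis as [s [Hs [Hs0 Hk]]].
  assert (Key : forall i j, (i < m)%nat -> (j < m)%nat -> gram i j = plane_x i * plane_x j + plane_y s i * plane_y s j)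
    by (intros; apply gram_planar; auto).
  exists plane_x, (plane_y s). split; [|split; [|split]].
  - unfold plane_x. apply gram_diag; lia.
  - unfold plane_y. rewrite gram_diag by lia. rewrite (gram_sym s 0). unfold Rdiv. ring.
  - intros i Hi. rewrite <- Key by auto. apply gram_diag; auto.
  - intros i j Hi Hj. rewrite <- Key by auto. unfold gram. rewrite lorentz_proj_proj by auto. fold Dr.
    destruct rho_spec. unfold rho, dl in *. pose proof Dr_ge3. field. split; lra.
Qed.

End Core.

(* For unit vectors u_1, ..., u_m of R^2 with pairwise inner products <= c,
   the polynomial f(p) = (p+1)(p+1/2)^2(p-c) is <= 0 at every off-diagonal
   product, while f(u_i.u_j) = a0 + sum_t w_t h_t(u_i) h_t(u_j) with weights
   w_t >= 0 (for c <= 7/8) and harmonics h_t = Re, Im of (x+iy)^k, k <= 4.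
   Summing over all pairs gives m^2 a0 <= m f(1), i.e. m a0 <= f(1). *)
Definition lp_poly (c p : R) : R := (p + 1) * (p + 1 / 2) * (p + 1 / 2) * (p - c).

Definition harmonic (t : nat) (x y : R) : R :=
  match t with
  | 0 => x | 1 => y
  | 2 => x * x - y * y | 3 => 2 * x * y
  | 4 => x * x * x - 3 * x * y * y | 5 => 3 * x * x * y - y * y * y
  | 6 => x * x * x * x - 6 * x * x * y * y + y * y * y * y | _ => 4 * x * x * x * y - 4 * x * y * y * y
  end.
Definition lp_weight (c : R) (t : nat) : R :=
  match t with
  | 0 | 1 => 7 / 4 - 2 * c | 2 | 3 => 9 / 8 - c | 4 | 5 => (2 - c) / 4 | _ => 1 / 8 end.
Definition lp_const (c : R) := 1 - 5 * c / 4.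

(* The harmonic expansion of f (Chebyshev expansion of f(cos theta)). *)
Lemma lp_poly_expansion c x1 y1 x2 y2 : x1 * x1 + y1 * y1 = 1 -> x2 * x2 + y2 * y2 = 1 ->
  lp_poly c (x1 * x2 + y1 * y2) = lp_const c + sumR 8 (fun t => lp_weight c t * (harmonic t x1 y1 * harmonic t x2 y2)).
Proof.
  intros U1 U2. simpl sumR. unfold harmonic, lp_weight, lp_const, lp_poly.
  set (p := x1 * x2 + y1 * y2).
  assert (h2 : (x1 * x1 - y1 * y1) * (x2 * x2 - y2 * y2) + 2 * x1 * y1 * (2 * x2 * y2) = 2 * p * p - (x1 * x1 + y1 * y1) * (x2 * x2 + y2 * y2)) by (unfold p; ring).
  assert (h3 : (x1 * x1 * x1 - 3 * x1 * y1 * y1) * (x2 * x2 * x2 - 3 * x2 * y2 * y2) + (3 * x1 * x1 * y1 - y1 * y1 * y1) * (3 * x2 * x2 * y2 - y2 * y2 * y2)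
     = 4 * p * p * p - 3 * p * ((x1 * x1 + y1 * y1) * (x2 * x2 + y2 * y2))) by (unfold p; ring).
  assert (h4 : (x1 * x1 * x1 * x1 - 6 * x1 * x1 * y1 * y1 + y1 * y1 * y1 * y1) * (x2 * x2 * x2 * x2 - 6 * x2 * x2 * y2 * y2 + y2 * y2 * y2 * y2)
     + (4 * x1 * x1 * x1 * y1 - 4 * x1 * y1 * y1 * y1) * (4 * x2 * x2 * x2 * y2 - 4 * x2 * y2 * y2 * y2)
     = 8 * p * p * p * p - 8 * p * p * ((x1 * x1 + y1 * y1) * (x2 * x2 + y2 * y2)) + ((x1 * x1 + y1 * y1) * (x2 * x2 + y2 * y2)) ^ 2) by (unfold p; ring).
  rewrite U1, U2 in h2, h3, h4.
  assert (h1 : x1 * x2 + y1 * y2 = p) by reflexivity.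
  transitivity (1 - 5 * c / 4 + (7 / 4 - 2 * c) * p + (9 / 8 - c) * (2 * p * p - 1 * 1)
     + (2 - c) / 4 * (4 * p * p * p - 3 * p * (1 * 1)) + 1 / 8 * (8 * p * p * p * p - 8 * p * p * (1 * 1) + (1 * 1) ^ 2)).
  - field.
  - rewrite <- h2, <- h3, <- h4. unfold p. ring.
Qed.

Section LP.
Variables (m : nat) (c : R) (x y : nat -> R).
Hypotheses (Hc : c <= 7 / 8) (U : forall i, (i < m)%nat -> x i * x i + y i * y i = 1)
  (P : forall i j, (i < m)%nat -> (j < m)%nat -> i <> j -> x i * x j + y i * y j <= c).
Let p i j := x i * x j + y i * y j.

(* Positive semidefiniteness of the expansion: the double sum of f is at least
   m^2 a0. *)
Lemma lp_total_ge : INR m * INR m * lp_const c <= sumR m (fun i => sumR m (fun j => lp_poly c (p i j))).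
Proof.
  rewrite (sumR_ext m _ (fun i => sumR m (fun j => lp_const c + sumR 8 (fun t => lp_weight c t * (harmonic t (x i) (y i) * harmonic t (x j) (y j)))))).
  2: { intros i Hi. apply sumR_ext. intros j Hj. apply lp_poly_expansion; auto. }
  rewrite (sumR_ext m _ (fun i => INR m * lp_const c + sumR 8 (fun t => lp_weight c t * (harmonic t (x i) (y i) * sumR m (fun j => harmonic t (x j) (y j)))))).
  2: { intros i Hi. rewrite sumR_plus, sumR_const. f_equal. rewrite sumR_swap. apply sumR_ext; intros t Ht.
       rewrite <- sumR_scal, <- sumR_scal. apply sumR_ext; intros; ring. }
  rewrite sumR_plus, sumR_const, sumR_swap.
  assert (0 <= sumR 8 (fun t => sumR m (fun i => lp_weight c t * (harmonic t (x i) (y i) * sumR m (fun j => harmonic t (x j) (y j)))))).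
  { apply sumR_nonneg. intros t Ht.
    rewrite (sumR_ext m _ (fun i => (lp_weight c t * sumR m (fun j => harmonic t (x j) (y j))) * harmonic t (x i) (y i))) by (intros; ring).
    rewrite sumR_scal. assert (0 <= lp_weight c t) by (unfold lp_weight; destruct t as [|[|[|[|[|[|[|]]]]]]]; lra). nra. }
  lra.
Qed.

Lemma inner_ge_m1 i j : (i < m)%nat -> (j < m)%nat -> -1 <= p i j.
Proof. intros. unfold p. pose proof (U i H). pose proof (U j H0).
  assert (0 <= (x i + x j) * (x i + x j) + (y i + y j) * (y i + y j)) by (apply Rplus_le_le_0_compat; apply Rle_0_sqr).
  replace ((x i + x j) * (x i + x j) + (y i + y j) * (y i + y j)) with ((x i * x i + y i * y i) + (x j * x j + y j * y j) + 2 * (x i * x j + y i * y j)) in H3 by ring.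
  lra. Qed.

(* Off the diagonal, -1 <= u_i.u_j <= c, so f <= 0 there. *)
Lemma lp_poly_offdiag_nonpos i j : (i < m)%nat -> (j < m)%nat -> i <> j -> lp_poly c (p i j) <= 0.
Proof.
  intros Hi Hj Hij. pose proof (inner_ge_m1 i j Hi Hj). pose proof (P i j Hi Hj Hij). fold (p i j) in H0.
  set (q := p i j) in *. replace (lp_poly c q) with ((q+1) * ((q+1/2)*(q+1/2)) * (q-c)) by (unfold lp_poly; ring).
  assert (0 <= (q+1)*((q+1/2)*(q+1/2))) by (apply Rmult_le_pos; [lra | apply Rle_0_sqr]).
  assert (0 <= (q+1)*((q+1/2)*(q+1/2)) * (c - q)) by (apply Rmult_le_pos; lra). lra.
Qed.

Lemma lp_poly_diag i : (i < m)%nat -> lp_poly c (p i i) = 9 / 2 * (1 - c).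
Proof. intros Hi. unfold p. rewrite U by auto. unfold lp_poly. field. Qed.

Lemma lp_row_le i : (i < m)%nat -> sumR m (fun j => lp_poly c (p i j)) <= 9 / 2 * (1 - c).
Proof. intros Hi. rewrite <- (lp_poly_diag i Hi). apply (sumR_le_one m (fun j => lp_poly c (p i j)) i); auto. intros j Hj Hne. apply lp_poly_offdiag_nonpos; auto. Qed.

Lemma lp_bound : INR m * lp_const c <= 9 / 2 * (1 - c).
Proof.
  pose proof lp_total_ge.
  assert (sumR m (fun i => sumR m (fun j => lp_poly c (p i j))) <= INR m * (9 / 2 * (1 - c))).
  { rewrite <- sumR_const. apply sumR_le. intros; apply lp_row_le; auto. }
  destruct m as [|m']. simpl. unfold lp_const. lra.
  assert (0 < INR (S m')) by (apply lt_0_INR; lia). nra.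
Qed.

(* When the bound is tight, each off-diagonal value of f is forced to be 0
   (it is >= m^2 a0 - m f(1)). *)
Lemma lp_offdiag_ge i0 j0 : (i0 < m)%nat -> (j0 < m)%nat -> i0 <> j0 ->
  INR m * INR m * lp_const c - INR m * (9 / 2 * (1 - c)) <= lp_poly c (p i0 j0).
Proof.
  intros Hi Hj Hij. pose proof lp_total_ge.
  assert (sumR m (fun i => sumR m (fun j => lp_poly c (p i j)) - 9 / 2 * (1 - c)) <= sumR m (fun j => lp_poly c (p i0 j)) - 9 / 2 * (1 - c)).
  { apply (sumR_le_one m (fun i => sumR m (fun j => lp_poly c (p i j)) - 9 / 2 * (1 - c)) i0); auto.
    intros i Hi' Hne. pose proof (lp_row_le i Hi'). lra. }
  rewrite (sumR_ext m _ (fun i => sumR m (fun j => lp_poly c (p i j)) + (-1) * (9 / 2 * (1 - c)))) in H0 by (intros; ring).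
  rewrite sumR_plus, sumR_const in H0.
  assert (sumR m (fun j => lp_poly c (p i0 j)) <= lp_poly c (p i0 i0) + lp_poly c (p i0 j0)).
  { apply (sumR_le_two m (fun j => lp_poly c (p i0 j)) i0 j0); auto. intros k Hk H1 H2. apply lp_poly_offdiag_nonpos; auto. }
  rewrite lp_poly_diag in H1 by auto. lra.
Qed.
End LP.

(* In a packing of at least three balls, products of inversive coordinates are
   <= -1, with equality exactly at tangency (complementary pairs cannot occur
   since a third ball would have to be disjoint from both). *)
Lemma packing_lorentz_le d n B i j : (1 <= d)%nat -> ball_packing d n B ->
  (i < n)%nat -> (j < n)%nat -> i <> j -> lorentz d (inv_coords d (B i)) (inv_coords d (B j)) <= -1.
Proof.
  intros Hd [HV HD] Hi Hj Hij.
  exact (proj1 (packing_pair_lorentz d (B i) (B j) Hd (HV i Hi) (HV j Hj) (HD i j Hi Hj Hij))).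
Qed.

Lemma packing_tangent_iff d n B i j : (1 <= d)%nat -> (3 <= n)%nat -> ball_packing d n B ->
  (i < n)%nat -> (j < n)%nat -> i <> j ->
  (tangent d (B i) (B j) <-> lorentz d (inv_coords d (B i)) (inv_coords d (B j)) = -1).
Proof.
  intros Hd Hn HP Hi Hj Hij. pose proof HP as [HV HD].
  destruct (packing_pair_lorentz d (B i) (B j) Hd (HV i Hi) (HV j Hj) (HD i j Hi Hj Hij)) as [_ [Htan Hcomp]].
  split; auto. intros HL. apply Hcomp; auto. intros Hanti.
  assert (Hthird : exists t, (t < n)%nat /\ t <> i /\ t <> j).
  { destruct (Nat.eq_dec i 0), (Nat.eq_dec j 0).
    - lia.
    - destruct (Nat.eq_dec j 1); [exists 2%nat|exists 1%nat]; lia.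
    - destruct (Nat.eq_dec i 1); [exists 2%nat|exists 1%nat]; lia.
    - exists 0%nat; lia. }
  destruct Hthird as [t [Ht [Hti Htj]]].
  apply (antipodal_no_third d (B i) (B j) (B t) Hanti); apply (packing_lorentz_le d n); auto.
Qed.

Lemma outer_rescale D p : 3 <= D ->
  ((1 + D / (D - 2)) * p - D / (D - 2) <= -1 <-> p <= 1 / (D - 1)) /\
  ((1 + D / (D - 2)) * p - D / (D - 2) = -1 <-> p = 1 / (D - 1)).
Proof.
  intros HD.
  assert (E : (1 + D / (D - 2)) * p - D / (D - 2) = (2 * D - 2) / (D - 2) * (p - 1 / (D - 1)) - 1)
    by (field; lra).
  assert (Hk : 0 < (2 * D - 2) / (D - 2)) by (apply Rdiv_lt_0_compat; lra).
  rewrite E. set (k := (2 * D - 2) / (D - 2)) in *. split; split; intros H; nra.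
Qed.

Lemma packing_circle_code d m G B : (3 <= d)%nat -> (3 <= m)%nat -> ball_packing d (d + m) B ->
  (forall i j, (i < d + m)%nat -> (j < d + m)%nat -> i <> j -> (join_K d G i j <-> tangent d (B i) (B j))) ->
  exists x y : nat -> R, x 0%nat = 1 /\ y 0%nat = 0 /\
    (forall i, (i < m)%nat -> x i * x i + y i * y i = 1) /\
    (forall i j, (i < m)%nat -> (j < m)%nat -> i <> j -> x i * x j + y i * y j <= 1 / (INR d - 1)) /\
    (forall i j, (i < m)%nat -> (j < m)%nat -> i <> j -> (G i j <-> x i * x j + y i * y j = 1 / (INR d - 1))).
Proof.
  intros Hd Hm HP HG.
  assert (HD3 : 3 <= INR d) by (apply (le_INR 3 d) in Hd; simpl in Hd; lra).
  destruct (circle_model d m (fun i => inv_coords d (B i)) Hd Hm) as [x [y [Hx0 [Hy0 [HU HL]]]]].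
  - intros i Hi. apply inRd_inv_coords.
  - intros i Hi. apply lorentz_self. apply (proj1 HP); auto.
  - intros i j Hi Hj Hij. apply (packing_tangent_iff d (d + m)); auto; try lia.
    apply (HG i j ltac:(lia) Hj Hij). left; auto.
  - intros i j Hi Hj Hij. apply (packing_lorentz_le d (d + m)); auto; lia.
  - exists x, y. split; [auto|split; [auto|split; [auto|split]]].
    + intros i j Hi Hj Hij. apply (outer_rescale (INR d)); auto.
      rewrite <- HL by auto. apply (packing_lorentz_le d (d + m)); auto; lia.
    + intros i j Hi Hj Hij. rewrite <- (proj2 (outer_rescale (INR d) _ HD3)), <- HL by auto.
      rewrite <- (packing_tangent_iff d (d + m)) by (assumption || lia). rewrite <- HG by lia. unfold join_K.
      replace (d + i - d)%nat with i by lia. replace (d + j - d)%nat with j by lia.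
      split; [auto|]. intros [|[|]]; auto; lia.
Qed.

(* d >= 5, m = 5: the inner products are <= 1/(d-1) <= 1/4, but the circle-code
   bound with c = 1/4 reads 5 * 11/16 <= 27/8, which is false. *)
Lemma not_packable_ge5 d G : (5 <= d)%nat -> ~ ball_packable d (d + 5) (join_K d G).
Proof.
  intros Hd [B [HP HG]].
  destruct (packing_circle_code d 5 G B ltac:(lia) ltac:(lia) HP HG) as [x [y [_ [_ [HU [HL _]]]]]].
  assert (HD5 : 5 <= INR d) by (apply (le_INR 5 d) in Hd; simpl in Hd; lra).
  assert (Hc : 1 / (INR d - 1) <= 1 / 4).
  { apply (Rmult_le_reg_r (4 * (INR d - 1))); [lra|]. field_simplify; lra. }
  assert (P : forall i j, (i < 5)%nat -> (j < 5)%nat -> i <> j -> x i * x j + y i * y j <= 1 / 4).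
  { intros i j Hi Hj Hij. pose proof (HL i j Hi Hj Hij). lra. }
  pose proof (lp_bound 5 (1/4) x y ltac:(lra) HU P) as Hbound.
  unfold lp_const in Hbound. simpl in Hbound. lra.
Qed.

(* d = 4, m = 6: the inner products are <= 1/3, but the circle-code bound with
   c = 1/3 reads 6 * 7/12 <= 3, which is false. *)
Lemma not_packable_4 G : ~ ball_packable 4 (4 + 6) (join_K 4 G).
Proof.
  intros [B [HP HG]].
  destruct (packing_circle_code 4 6 G B ltac:(lia) ltac:(lia) HP HG) as [x [y [_ [_ [HU [HL _]]]]]].
  assert (P : forall i j, (i < 6)%nat -> (j < 6)%nat -> i <> j -> x i * x j + y i * y j <= 1 / 3).
  { intros i j Hi Hj Hij. pose proof (HL i j Hi Hj Hij) as Hij'. simpl INR in Hij'.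
    replace (1 / (1 + 1 + 1 + 1 - 1)) with (1 / 3) in Hij' by field. lra. }
  pose proof (lp_bound 6 (1/3) x y ltac:(lra) HU P) as Hbound.
  unfold lp_const in Hbound. simpl in Hbound. lra.
Qed.

Definition half_sqrt3 := sqrt 3 / 2.
Lemma half_sqrt3_sq : half_sqrt3 * half_sqrt3 = 3 / 4.
Proof. unfold half_sqrt3. replace (sqrt 3 / 2 * (sqrt 3 / 2)) with (sqrt 3 * sqrt 3 / 4) by field. rewrite sqrt_sqrt; lra. Qed.
Lemma half_sqrt3_pos : 0 < half_sqrt3.
Proof. unfold half_sqrt3. apply Rdiv_lt_0_compat; [apply sqrt_lt_R0; lra|lra]. Qed.

Definition hex_x (k : nat) : R := match k with 0 => 1 | 1 => 1/2 | 2 => -1/2 | 3 => -1 | 4 => -1/2 | _ => 1/2 end.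
Definition hex_y (k : nat) : R := match k with 0 => 0 | 1 => half_sqrt3 | 2 => half_sqrt3 | 3 => 0 | 4 => - half_sqrt3 | _ => - half_sqrt3 end.

Lemma hex_C6 a b : (a < 6)%nat -> (b < 6)%nat -> (hex_x a * hex_x b + hex_y a * hex_y b = 1 / 2 <-> C6 a b).
Proof.
  intros Ha Hb. pose proof half_sqrt3_sq. pose proof half_sqrt3_pos.
  destruct a as [|[|[|[|[|[|a]]]]]]; try lia; destruct b as [|[|[|[|[|[|b]]]]]]; try lia;
  unfold hex_x, hex_y, C6; simpl; split; intros; try lia; try nra; try (left; reflexivity); try (right; reflexivity).
Qed.

Lemma hex_unit a : hex_x a * hex_x a + hex_y a * hex_y a = 1.
Proof. pose proof half_sqrt3_sq. destruct a as [|[|[|[|[|[|a]]]]]]; unfold hex_x, hex_y; nra. Qed.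

Lemma C6_irrefl a : (a < 6)%nat -> ~ C6 a a.
Proof. intros Ha. destruct a as [|[|[|[|[|[|a]]]]]]; try lia; unfold C6; simpl; lia. Qed.

Definition hex_index (x y : R) : nat :=
  if Rlt_dec (3/4) x then 0%nat
  else if Rlt_dec 0 x then (if Rlt_dec 0 y then 1%nat else 5%nat)
  else if Rlt_dec (-3/4) x then (if Rlt_dec 0 y then 2%nat else 4%nat)
  else 3%nat.

Lemma hex_index_spec x y : x * x + y * y = 1 -> (x = 1 \/ x = 1/2 \/ x = -1/2 \/ x = -1) ->
  (hex_index x y < 6)%nat /\ hex_x (hex_index x y) = x /\ hex_y (hex_index x y) = y.
Proof.
  intros U Hx. pose proof half_sqrt3_sq. pose proof half_sqrt3_pos. unfold hex_index.
  destruct Hx as [ -> | [ -> | [ -> | -> ] ] ].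
  - destruct (Rlt_dec (3/4) 1); [|lra]. simpl. split; [lia|split; [lra|nra]].
  - destruct (Rlt_dec (3/4) (1/2)); [lra|]. destruct (Rlt_dec 0 (1/2)); [|lra].
    assert (y * y = half_sqrt3 * half_sqrt3) by nra.
    destruct (Rlt_dec 0 y); simpl; (split; [lia|split; [lra|nra]]).
  - destruct (Rlt_dec (3/4) (-1/2)); [lra|]. destruct (Rlt_dec 0 (-1/2)); [lra|]. destruct (Rlt_dec (-3/4) (-1/2)); [|lra].
    assert (y * y = half_sqrt3 * half_sqrt3) by nra.
    destruct (Rlt_dec 0 y); simpl; (split; [lia|split; [lra|nra]]).
  - destruct (Rlt_dec (3/4) (-1)); [lra|]. destruct (Rlt_dec 0 (-1)); [lra|]. destruct (Rlt_dec (-3/4) (-1)); [lra|].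
    simpl. split; [lia|split; [lra|nra]].
Qed.

(* Six unit vectors with pairwise inner products <= 1/2, the first being (1,0),
   make the circle-code bound tight (6 * 3/8 = f(1) = 9/4).  Hence f vanishes at
   every off-diagonal product, so x_j = u_0.u_j is one of 1, 1/2, -1/2, -1 and
   every u_j is a vertex of the hexagon. *)
Lemma tight_code_hexagon (x y : nat -> R) : x 0%nat = 1 -> y 0%nat = 0 ->
  (forall i, (i < 6)%nat -> x i * x i + y i * y i = 1) ->
  (forall i j, (i < 6)%nat -> (j < 6)%nat -> i <> j -> x i * x j + y i * y j <= 1 / 2) ->
  forall j, (j < 6)%nat ->
    (hex_index (x j) (y j) < 6)%nat /\ hex_x (hex_index (x j) (y j)) = x j /\ hex_y (hex_index (x j) (y j)) = y j.
Proof.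
  intros Hx0 Hy0 HU HL j Hj. apply hex_index_spec; auto.
  destruct (Nat.eq_dec j 0) as [ -> | Hne]; [left; auto|].
  assert (Hzero : lp_poly (1/2) (x 0%nat * x j + y 0%nat * y j) = 0).
  { pose proof (lp_offdiag_ge 6 (1/2) x y ltac:(lra) HU HL 0 j ltac:(lia) Hj ltac:(lia)) as Hge.
    pose proof (lp_poly_offdiag_nonpos 6 (1/2) x y HU HL 0 j ltac:(lia) Hj ltac:(lia)).
    unfold lp_const in Hge. simpl in Hge. lra. }
  rewrite Hx0, Hy0 in Hzero. replace (1 * x j + 0 * y j) with (x j) in Hzero by ring. unfold lp_poly in Hzero.
  apply Rmult_integral in Hzero. destruct Hzero as [H|H]; [|right; left; lra].
  apply Rmult_integral in H. destruct H as [H|H]; [|right; right; left; lra].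
  apply Rmult_integral in H. destruct H as [H|H]; [right; right; right; lra|right; right; left; lra].
Qed.

(* d = 3, m = 6: the six outer balls sit on the hexagon, and tangency is
   adjacency on it, so G_6 is isomorphic to C_6. *)
Lemma packable_3_hexagon G : simple_graph 6 G -> ball_packable 3 (3 + 6) (join_K 3 G) -> graph_iso 6 G C6.
Proof.
  intros HS [B [HP HG]].
  destruct (packing_circle_code 3 6 G B ltac:(lia) ltac:(lia) HP HG) as [x [y [Hx0 [Hy0 [HU [HL HT]]]]]].
  replace (1 / (INR 3 - 1)) with (1 / 2) in HL, HT by (simpl; field).
  pose proof (tight_code_hexagon x y Hx0 Hy0 HU HL) as K.
  exists (fun j => hex_index (x j) (y j)). split; [|split].
  - intros i Hi. apply K; auto.
  - intros i j Hi Hj Heq. cbv beta in Heq. destruct (Nat.eq_dec i j) as [|Hne]; auto. exfalso.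
    pose proof (HL i j Hi Hj Hne) as Hle.
    destruct (K i Hi) as [_ [Ki1 Ki2]], (K j Hj) as [_ [Kj1 Kj2]].
    assert (Ex : x i = x j) by (rewrite <- Ki1, <- Kj1, Heq; auto).
    assert (Ey : y i = y j) by (rewrite <- Ki2, <- Kj2, Heq; auto).
    rewrite Ex, Ey, (HU j Hj) in Hle. lra.
  - intros i j Hi Hj. destruct (Nat.eq_dec i j) as [ -> | Hne].
    + split; intros H. destruct (HS j j Hj Hj H); tauto. exfalso; apply (C6_irrefl _ (proj1 (K j Hj)) H).
    + rewrite (HT i j Hi Hj Hne). destruct (K i Hi) as [Ki0 [Ki1 Ki2]], (K j Hj) as [Kj0 [Kj1 Kj2]].
      rewrite <- (hex_C6 _ _ Ki0 Kj0). rewrite Ki1, Ki2, Kj1, Kj2. tauto.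
Qed.

Lemma dot3 u v : dot 3 u v = u 0%nat * v 0%nat + u 1%nat * v 1%nat + u 2%nat * v 2%nat.
Proof. simpl. ring. Qed.

(* The construction for K_3 * C_6 in R^3: the half-spaces {z <= -1} and
   {z >= 1} (tangent at infinity), the unit ball at the origin, and six unit
   balls centred at 2 u_k for the hexagon vertices u_k; two of the latter are
   tangent iff their vertices are adjacent. *)
Definition e_below : vec := fun i => if (i =? 2)%nat then 1 else 0.
Definition e_above : vec := fun i => if (i =? 2)%nat then -1 else 0.
Definition hex_centre (a : nat) : vec := fun i => if (i =? 0)%nat then 2 * hex_x a else if (i =? 1)%nat then 2 * hex_y a else 0.

Lemma inRd_e_below : inRd 3 e_below. Proof. intros i Hi. unfold e_below. destruct (Nat.eqb_spec i 2); [lia|auto]. Qed.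
Lemma inRd_e_above : inRd 3 e_above. Proof. intros i Hi. unfold e_above. destruct (Nat.eqb_spec i 2); [lia|auto]. Qed.
Lemma inRd_hex_centre a : inRd 3 (hex_centre a). Proof. intros i Hi. unfold hex_centre. destruct (Nat.eqb_spec i 0); [lia|]. destruct (Nat.eqb_spec i 1); [lia|auto]. Qed.
Lemma inRd_vzero : inRd 3 vzero. Proof. intros i Hi; reflexivity. Qed.

Lemma dot_e_below : dot 3 e_below e_below = 1. Proof. rewrite dot3. unfold e_below; simpl; ring. Qed.
Lemma dot_e_above : dot 3 e_above e_above = 1. Proof. rewrite dot3. unfold e_above; simpl; ring. Qed.
Lemma vnorm_e_below : vnorm 3 e_below = 1. Proof. unfold vnorm. rewrite dot_e_below. apply sqrt_1. Qed.
Lemma vnorm_e_above : vnorm 3 e_above = 1. Proof. unfold vnorm. rewrite dot_e_above. apply sqrt_1. Qed.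
Lemma e_below_hex_centre a : dot 3 e_below (hex_centre a) = 0. Proof. rewrite dot3. unfold e_below, hex_centre; simpl; ring. Qed.
Lemma e_above_hex_centre a : dot 3 e_above (hex_centre a) = 0. Proof. rewrite dot3. unfold e_above, hex_centre; simpl; ring. Qed.
Lemma e_below_origin : dot 3 e_below vzero = 0. Proof. rewrite dot3. unfold e_below, vzero; simpl; ring. Qed.
Lemma e_above_origin : dot 3 e_above vzero = 0. Proof. rewrite dot3. unfold e_above, vzero; simpl; ring. Qed.
Lemma dist2_origin_hex_centre a : dist2 3 vzero (hex_centre a) = 4.
Proof. unfold dist2. rewrite dot3. unfold vzero, hex_centre; simpl. pose proof (hex_unit a). nra. Qed.
Lemma dist2_hex_centres a b : dist2 3 (hex_centre a) (hex_centre b) = 8 - 8 * (hex_x a * hex_x b + hex_y a * hex_y b).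
Proof. unfold dist2. rewrite dot3. unfold hex_centre; simpl. pose proof (hex_unit a). pose proof (hex_unit b). nra. Qed.

Lemma hex_inner_le a b : (a < 6)%nat -> (b < 6)%nat -> a <> b -> hex_x a * hex_x b + hex_y a * hex_y b <= 1 / 2.
Proof.
  intros Ha Hb Hab. pose proof half_sqrt3_sq. pose proof half_sqrt3_pos.
  destruct a as [|[|[|[|[|[|a]]]]]]; try lia; destruct b as [|[|[|[|[|[|b]]]]]]; try lia; unfold hex_x, hex_y; nra.
Qed.

Definition slab_below := HSpace e_below (-1).
Definition slab_above := HSpace e_above (-1).
Definition central_ball := CBall vzero 1.

Lemma slabs_antipar : antipar 3 e_below e_above.
Proof. unfold antipar. rewrite vnorm_e_below, vnorm_e_above. intros i Hi. unfold e_below, e_above. destruct (i =? 2)%nat; field. Qed.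

Lemma slabs_tangent : disjoint_int 3 slab_below slab_above /\ tangent 3 slab_below slab_above.
Proof.
  pose proof dot_e_below. pose proof dot_e_above. split.
  - apply HH_disjoint_of; try apply inRd_e_below; try apply inRd_e_above; try lra. all: try apply slabs_antipar. all: try (rewrite vnorm_e_below, vnorm_e_above; lra).
  - apply HH_tangent; try lra. all: try apply slabs_antipar. all: try (rewrite vnorm_e_below, vnorm_e_above; lra).
Qed.

Lemma unit_ball_slab_tangent c a : inRd 3 c -> inRd 3 a -> dot 3 a a = 1 -> dot 3 a c = 0 ->
  disjoint_int 3 (CBall c 1) (HSpace a (-1)) /\ tangent 3 (CBall c 1) (HSpace a (-1)).
Proof.
  intros Hc Ha H1 H2. assert (vnorm 3 a = 1) by (unfold vnorm; rewrite H1; apply sqrt_1).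
  split.
  - apply BH_disjoint_of; auto; try lra.
  - apply BH_tangent; auto; try lra.
Qed.

Lemma unit_balls_tangent_iff c1 c2 : inRd 3 c1 -> inRd 3 c2 -> 4 <= dist2 3 c1 c2 ->
  disjoint_int 3 (CBall c1 1) (CBall c2 1) /\ (tangent 3 (CBall c1 1) (CBall c2 1) <-> dist2 3 c1 c2 = 4).
Proof.
  intros Hc1 Hc2 H. split.
  - apply BB_disjoint_of; auto; try lra.
  - split.
    + intros [[x|] [Hm1 [Hm2 _]]]; [|destruct Hm1]. destruct Hm1 as [_ Hm1], Hm2 as [_ Hm2].
      pose proof (BB_meet_bound 3 c1 c2 1 1 ltac:(lra) ltac:(lra) x Hm1 Hm2). lra.
    + intros HE. apply BB_tangent; auto; try lra.
Qed.

Section Constr.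
Variables (G : nat -> nat -> Prop) (f : nat -> nat).
Hypotheses (Hf1 : forall i, (i < 6)%nat -> (f i < 6)%nat)
  (Hf2 : forall i j, (i < 6)%nat -> (j < 6)%nat -> f i = f j -> i = j)
  (Hf3 : forall i j, (i < 6)%nat -> (j < 6)%nat -> (G i j <-> C6 (f i) (f j))).

Definition hex_packing (i : nat) : dball :=
  match i with 0 => slab_below | 1 => slab_above | 2 => central_ball | S (S (S j)) => CBall (hex_centre (f j)) 1 end.

Definition hex_tangency (i j : nat) : Prop := (i < 3)%nat \/ (j < 3)%nat \/ C6 (f (i - 3)) (f (j - 3)).

Lemma hex_packing_pair i j : (i < j)%nat -> (j < 9)%nat -> disjoint_int 3 (hex_packing i) (hex_packing j) /\ (tangent 3 (hex_packing i) (hex_packing j) <-> hex_tangency i j).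
Proof.
  intros Hij Hj. unfold hex_tangency.
  assert (Tr : forall A B P : Prop, P -> A /\ B -> A /\ (B <-> P)) by tauto.
  assert (Sw : forall B1 B2, disjoint_int 3 B2 B1 /\ tangent 3 B2 B1 -> disjoint_int 3 B1 B2 /\ tangent 3 B1 B2).
  { intros B1 B2 [X Y]. split; [apply disjoint_int_sym|apply tangent_sym]; auto. }
  destruct i as [|[|[|i]]].
  - destruct j as [|[|[|j]]]; try lia.
    + simpl. apply Tr; [left; lia| apply slabs_tangent].
    + simpl. apply Tr; [left; lia|]. apply Sw. apply unit_ball_slab_tangent; auto using inRd_vzero, inRd_e_below, dot_e_below, e_below_origin.
    + simpl. apply Tr; [left; lia|]. apply Sw. apply unit_ball_slab_tangent; auto using inRd_hex_centre, inRd_e_below, dot_e_below, e_below_hex_centre.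
  - destruct j as [|[|[|j]]]; try lia.
    + simpl. apply Tr; [left; lia|]. apply Sw. apply unit_ball_slab_tangent; auto using inRd_vzero, inRd_e_above, dot_e_above, e_above_origin.
    + simpl. apply Tr; [left; lia|]. apply Sw. apply unit_ball_slab_tangent; auto using inRd_hex_centre, inRd_e_above, dot_e_above, e_above_hex_centre.
  - destruct j as [|[|[|j]]]; try lia. simpl. apply Tr; [left; lia|].
    destruct (unit_balls_tangent_iff vzero (hex_centre (f j)) inRd_vzero (inRd_hex_centre _) ltac:(rewrite dist2_origin_hex_centre; lra)) as [A1 A2].
    split; auto. apply A2. apply dist2_origin_hex_centre.
  - destruct j as [|[|[|j]]]; try lia. simpl hex_packing.
    replace (S (S (S i)) - 3)%nat with i by lia. replace (S (S (S j)) - 3)%nat with j by lia.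
    assert (Hfi : (f i < 6)%nat) by (apply Hf1; lia). assert (Hfj : (f j < 6)%nat) by (apply Hf1; lia).
    assert (Hne : f i <> f j) by (intros E; apply Hf2 in E; lia).
    pose proof (hex_inner_le _ _ Hfi Hfj Hne).
    destruct (unit_balls_tangent_iff (hex_centre (f i)) (hex_centre (f j)) (inRd_hex_centre _) (inRd_hex_centre _) ltac:(rewrite dist2_hex_centres; lra)) as [A1 A2].
    split; auto. rewrite A2, dist2_hex_centres. rewrite <- (hex_C6 _ _ Hfi Hfj).
    split; [intros E; right; right; lra| intros [E|[E|E]]; [lia|lia|lra]].
Qed.

Lemma hex_packing_valid i : (i < 9)%nat -> valid_ball 3 (hex_packing i).
Proof.
  intros Hi. destruct i as [|[|[|i]]]; simpl.
  - split. apply inRd_e_below. exists 2%nat. split. lia. unfold e_below. simpl. lra.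
  - split. apply inRd_e_above. exists 2%nat. split. lia. unfold e_above. simpl. lra.
  - split. apply inRd_vzero. lra.
  - split. apply inRd_hex_centre. lra.
Qed.

Lemma packable_3_of_C6 : ball_packable 3 (3 + 6) (join_K 3 G).
Proof.
  exists hex_packing. split; [split|].
  - apply hex_packing_valid.
  - intros i j Hi Hj Hij. destruct (proj1 (Nat.lt_gt_cases i j) Hij) as [H|H].
    + apply (hex_packing_pair i j H Hj).
    + apply disjoint_int_sym, (hex_packing_pair j i H Hi).
  - intros i j Hi Hj Hij.
    assert (E : join_K 3 G i j <-> hex_tangency i j).
    { unfold join_K, hex_tangency. destruct (Nat.lt_ge_cases i 3); [tauto|]. destruct (Nat.lt_ge_cases j 3); [tauto|].
      rewrite Hf3 by lia. tauto. }
    rewrite E.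
    destruct (proj1 (Nat.lt_gt_cases i j) Hij) as [H|H].
    + symmetry. apply (hex_packing_pair i j H Hj).
    + assert (hex_tangency i j <-> hex_tangency j i) by (unfold hex_tangency; split; intros [|[|]]; auto; right; right; unfold C6 in *; tauto).
      rewrite H0. destruct (hex_packing_pair j i H Hi) as [_ T]. rewrite <- T. split; apply tangent_sym.
Qed.
End Constr.

Close Scope R_scope.
Theorem corollary3p2 :
  (forall d : nat, (d = 3 \/ d = 4)%nat ->
     forall G : nat -> nat -> Prop, simple_graph 6 G ->
       (ball_packable d (d + 6) (join_K d G) <-> (d = 3%nat /\ graph_iso 6 G C6))) /\
  (forall d : nat, (5 <= d)%nat ->
     forall G : nat -> nat -> Prop, simple_graph 5 G ->
       ~ ball_packable d (d + 5) (join_K d G)).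
Proof.
  split.
  - intros d [-> | ->] G HS; split.
    + intros H. split; auto. apply packable_3_hexagon; auto.
    + intros [_ [f [Hf1 [Hf2 Hf3]]]]. apply (packable_3_of_C6 G f); auto.
    + intros H. exfalso. apply (not_packable_4 G H).
    + intros [H _]. discriminate.
  - intros d Hd G _. apply not_packable_ge5; auto.
Qed.
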